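(* Let $a<0$, $b>0$, $k>0$, and let $M:\mathbb{R}^2\to\mathbb{R}^2$ be $C^2$ with $M(0)=0$ and $M'(0)=0$. For $\varepsilon>0$ consider the impacting system $$\begin{pmatrix}\dot x\\ \dot y\end{pmatrix}=\begin{pmatrix}ax-by\\ bx+ay\end{pmatrix}+M(x,y)\quad\text{if } y-\varepsilon<0,\qquad x\mapsto -k\varepsilon\ (\text{$y$ unchanged})\quad\text{if } y-\varepsilon=0.$$ If $$\frac{a}{b}\cdot\frac{3\pi}{2}-\frac{a}{b}\,\mathrm{arccot}(-k)+\frac12\ln(1+k^2)>\frac{a}{b}\Big(-\frac{\pi}{2}\Big)-\frac{a}{b}\,\mathrm{arccot}\Big(-\frac{a}{b}\Big)+\frac12\ln\Big(1+\frac{a^2}{b^2}\Big),$$ then for all sufficiently small $\varepsilon>0$ the system admits a finite-time stable limit cycle $(x_\varepsilon(t),y_\varepsilon(t))$ with exactly one impact per period, which shrinks to the origin as $\varepsilon\to0$.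
   Context: $\mathrm{arccot}$ takes values in $(0,\pi)$. A periodic orbit is finite-time stable if every trajectory starting in a sufficiently small neighborhood of it coincides with the periodic orbit (up to a time shift) after finite time. *)

From Stdlib Require Import Reals Lra.
Open Scope R_scope.

(* arccot with values in (0, PI) *)
Definition arccot (x : R) : R := PI / 2 - atan x.

Definition dist2 (p q : R * R) : R :=
  sqrt ((fst p - fst q) ^ 2 + (snd p - snd q) ^ 2).

Definition cont2 (g : R * R -> R) : Prop :=
  forall p e, 0 < e -> exists d, 0 < d /\
    forall q, dist2 q p < d -> Rabs (g q - g p) < e.

Definition has_partials (g gx gy : R * R -> R) : Prop :=
  (forall x y, derivable_pt_lim (fun u => g (u, y)) x (gx (x, y))) /\
  (forall x y, derivable_pt_lim (fun v => g (x, v)) y (gy (x, y))).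

Definition C2_fun (g : R * R -> R) : Prop :=
  exists gx gy gxx gxy gyx gyy : R * R -> R,
    has_partials g gx gy /\
    has_partials gx gxx gxy /\
    has_partials gy gyx gyy /\
    cont2 g /\ cont2 gx /\ cont2 gy /\
    cont2 gxx /\ cont2 gxy /\ cont2 gyx /\ cont2 gyy.

Definition C2_map (M : R * R -> R * R) : Prop :=
  C2_fun (fun p => fst (M p)) /\ C2_fun (fun p => snd (M p)).

Definition field (a b : R) (M : R * R -> R * R) (p : R * R) : R * R :=
  (a * fst p - b * snd p + fst (M p), b * fst p + a * snd p + snd (M p)).

Definition right_deriv (f : R -> R) (t l : R) : Prop :=
  forall e, 0 < e -> exists d, 0 < d /\
    forall h, 0 < h < d -> Rabs ((f (t + h) - f t) / h - l) < e.

Definition left_lim (f : R -> R) (t l : R) : Prop :=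
  forall e, 0 < e -> exists d, 0 < d /\
    forall s, t - d < s < t -> Rabs (f s - l) < e.

(* z : [0,oo) -> R^2 is a (forward, globally defined) solution of the
   impacting system: flow of [field] while y < eps; when y = eps the
   state is reset to x = -k eps (y unchanged).  Convention: the state at
   an impact instant is the post-impact state (right-continuity), the
   pre-impact state being the left limit. *)
Definition hybrid_sol (a b k : R) (M : R * R -> R * R) (eps : R)
  (z : R -> R * R) : Prop :=
  (forall t, 0 <= t -> snd (z t) <= eps) /\
  (forall t, 0 < t -> snd (z t) < eps ->
     derivable_pt_lim (fun s => fst (z s)) t (fst (field a b M (z t))) /\
     derivable_pt_lim (fun s => snd (z s)) t (snd (field a b M (z t)))) /\
  (forall t, 0 <= t ->
     right_deriv (fun s => fst (z s)) t (fst (field a b M (z t))) /\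
     right_deriv (fun s => snd (z s)) t (snd (field a b M (z t)))) /\
  (forall t, 0 <= t -> snd (z t) = eps -> fst (z t) = - k * eps) /\
  (forall t, 0 < t -> snd (z t) = eps ->
     exists xi, left_lim (fun s => fst (z s)) t xi /\
                left_lim (fun s => snd (z s)) t eps).

(* the solution z starts at the point p (if p lies on the impact line
   y = eps, the impact rule is applied at time 0) *)
Definition starts_at (k eps : R) (z : R -> R * R) (p : R * R) : Prop :=
  (snd p < eps /\ z 0 = p) \/ (snd p = eps /\ z 0 = (- k * eps, eps)).

Definition periodic_sol (z : R -> R * R) (T : R) : Prop :=
  0 < T /\ forall t, 0 <= t -> z (t + T) = z t.

Definition one_impact_per_period (eps : R) (z : R -> R * R) (T : R) : Prop :=
  exists tau, 0 <= tau < T /\ snd (z tau) = eps /\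
    forall s, 0 <= s < T -> snd (z s) = eps -> s = tau.

Definition ft_stable (a b k : R) (M : R * R -> R * R) (eps : R)
  (z : R -> R * R) : Prop :=
  exists delta, 0 < delta /\
    forall (p : R * R) (w : R -> R * R),
      (exists s, 0 <= s /\ dist2 p (z s) < delta) ->
      hybrid_sol a b k M eps w -> starts_at k eps w p ->
      exists t1 c, 0 <= t1 /\ 0 <= c /\
        forall t, t1 <= t -> w t = z (t + c).

Definition ft_stable_cycle_one_impact (a b k : R) (M : R * R -> R * R)
  (eps : R) (z : R -> R * R) (T : R) : Prop :=
  hybrid_sol a b k M eps z /\ periodic_sol z T /\
  one_impact_per_period eps z T /\ ft_stable a b k M eps z.

(** After the rescaling [p = eps q] the unperturbed flow starting at the reset point [(-k, 1)]
    is the spiral [lin_sol]; the hypothesis on [a, b, k] says exactly that this spiral climbs back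
    above the impact line [y = 1] one turn later, at [return_time].  Since [M] is [o(|p|)], on
    the box of size [O(eps)] it is Lipschitz with an arbitrarily small constant [dl], so by
    Gronwall the true flow from [(-k eps, eps)] stays [eps]-close to [eps lin_sol] and also
    returns to the line, at a first time [T].  Every impact resets the state to the same point
    [(-k eps, eps)], so this arc repeated with period [T] is a solution with one impact per
    period; any solution starting near it follows a nearby flow (Gronwall again), hits the line
    and from then on coincides with the cycle.  Global flows are obtained by Picard iteration
    for the field in which [M] is evaluated at the projection onto the box, which is globally
    Lipschitz. *)

From Stdlib Require Import Reals Lra Lia ZArith Classical ClassicalEpsilon.
From Coquelicot Require Import Coquelicot.
Open Scope R_scope.

Definition cont_at (g : R -> R) (t : R) : Prop :=
  forall e, 0 < e -> exists d, 0 < d /\ forall s, Rabs (s - t) < d -> Rabs (g s - g t) < e.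

Lemma cont_at_continuous g t : cont_at g t -> continuous g t.
Proof.
  intros H. apply continuity_pt_filterlim, continuity_pt_locally.
  intros eps. destruct (H eps (cond_pos eps)) as [d [Hd Hs]].
  exists (mkposreal d Hd). exact Hs.
Qed.

Lemma continuous_cont_at g t : continuous g t -> cont_at g t.
Proof.
  intros H e He. apply continuity_pt_filterlim in H. rewrite continuity_pt_locally in H.
  destruct (H (mkposreal e He)) as [d Hd]. exists d. split; [apply cond_pos | exact Hd].
Qed.

Lemma cont_at_const c t : cont_at (fun _ => c) t.
Proof. apply continuous_cont_at, continuous_const. Qed.

Lemma cont_at_plus g h t : cont_at g t -> cont_at h t -> cont_at (fun s => g s + h s) t.
Proof.
  intros Hg Hh. apply continuous_cont_at.
  apply (continuous_plus g h); apply cont_at_continuous; assumption.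
Qed.

Lemma cont_at_minus g h t : cont_at g t -> cont_at h t -> cont_at (fun s => g s - h s) t.
Proof.
  intros Hg Hh. apply continuous_cont_at.
  apply (continuous_minus g h); apply cont_at_continuous; assumption.
Qed.

Lemma cont_at_mult g h t : cont_at g t -> cont_at h t -> cont_at (fun s => g s * h s) t.
Proof.
  intros Hg Hh. apply continuous_cont_at.
  apply (continuous_mult (K := R_AbsRing) g h); apply cont_at_continuous; assumption.
Qed.

Lemma cont_at_abs g t : cont_at g t -> cont_at (fun s => Rabs (g s)) t.
Proof. intros Hg. apply continuous_cont_at, continuous_Rabs_comp, cont_at_continuous, Hg. Qed.

Lemma cont_at_derivable f t l : derivable_pt_lim f t l -> cont_at f t.
Proof.
  intros H. apply continuous_cont_at, continuity_pt_filterlim, derivable_continuous_pt.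
  exists l. exact H.
Qed.

Lemma ex_RInt_cont (g : R -> R) a b : (forall x, cont_at g x) -> ex_RInt g a b.
Proof.
  intros Hg. apply (ex_RInt_continuous (V := R_CompleteNormedModule)).
  intros z _. apply cont_at_continuous, Hg.
Qed.

Lemma is_derive_RInt_cont (g : R -> R) t :
  (forall x, cont_at g x) -> is_derive (fun t => RInt g 0 t) t (g t).
Proof.
  intros Hg. apply is_derive_RInt with (a := 0).
  - apply filter_forall. intros b. apply (RInt_correct (V := R_CompleteNormedModule)).
    apply ex_RInt_cont, Hg.
  - apply cont_at_continuous, Hg.
Qed.

Lemma cont_at_RInt (g : R -> R) t : (forall x, cont_at g x) -> cont_at (fun t => RInt g 0 t) t.
Proof.
  intros Hg. apply continuous_cont_at.
  apply (ex_derive_continuous (K := R_AbsRing) (V := R_NormedModule)).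
  eexists. apply is_derive_RInt_cont, Hg.
Qed.

Lemma RInt_minus_R (g h : R -> R) a b : ex_RInt g a b -> ex_RInt h a b ->
  RInt (fun s => g s - h s) a b = RInt g a b - RInt h a b.
Proof. intros. apply (RInt_minus (V := R_CompleteNormedModule)); assumption. Qed.

Lemma RInt_plus_R (g h : R -> R) a b : ex_RInt g a b -> ex_RInt h a b ->
  RInt (fun s => g s + h s) a b = RInt g a b + RInt h a b.
Proof. intros. apply (RInt_plus (V := R_CompleteNormedModule)); assumption. Qed.

Lemma RInt_const_R c a b : RInt (fun _ => c) a b = (b - a) * c.
Proof. rewrite (RInt_const (V := R_CompleteNormedModule)). reflexivity. Qed.

Lemma RInt_scal_exp A c t : 0 < c ->
  RInt (fun s => A * exp (c * s)) 0 t = A * (exp (c * t) - 1) / c.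
Proof.
  intros Hc. apply is_RInt_unique.
  replace (A * (exp (c * t) - 1) / c) with
    (minus (A * exp (c * t) / c) (A * exp (c * 0) / c))
    by (rewrite Rmult_0_r, exp_0; unfold minus, plus, opp; simpl; field; lra).
  apply (is_RInt_derive (V := R_CompleteNormedModule) (fun s => A * exp (c * s) / c)).
  - intros x _. auto_derive; [exact I | field; lra].
  - intros x _. apply (continuous_mult (K := R_AbsRing) (fun _ => A)); [apply continuous_const |].
    apply continuous_exp_comp, (continuous_mult (K := R_AbsRing) (fun _ => c));
      [apply continuous_const | apply continuous_id].
Qed.

Lemma exp_le_compat x y : x <= y -> exp x <= exp y.
Proof. intros [Hlt | ->]; [left; apply exp_increasing, Hlt | apply Rle_refl]. Qed.

(** * Flows of globally Lipschitz fields *)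

Definition dist1 (p q : R * R) := Rabs (fst p - fst q) + Rabs (snd p - snd q).
Definition norm1 (p : R * R) := Rabs (fst p) + Rabs (snd p).
Definition lipschitz1 (f : R * R -> R * R) K := forall u v, dist1 (f u) (f v) <= K * dist1 u v.
Definition cont2_at (g : R -> R * R) t := cont_at (fun s => fst (g s)) t /\ cont_at (fun s => snd (g s)) t.

Lemma dist1_ge0 p q : 0 <= dist1 p q.
Proof. unfold dist1. pose proof (Rabs_pos (fst p - fst q)). pose proof (Rabs_pos (snd p - snd q)). lra. Qed.

Lemma dist1_sym p q : dist1 p q = dist1 q p.
Proof. unfold dist1. rewrite (Rabs_minus_sym (fst p)), (Rabs_minus_sym (snd p)). reflexivity. Qed.

Lemma dist1_triangle p q r : dist1 p r <= dist1 p q + dist1 q r.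
Proof.
  unfold dist1.
  pose proof (Rabs_triang (fst p - fst q) (fst q - fst r)).
  pose proof (Rabs_triang (snd p - snd q) (snd q - snd r)).
  replace (fst p - fst r) with (fst p - fst q + (fst q - fst r)) by ring.
  replace (snd p - snd r) with (snd p - snd q + (snd q - snd r)) by ring. lra.
Qed.

Lemma dist1_eq0 p q : dist1 p q = 0 -> p = q.
Proof.
  unfold dist1. intros H. pose proof (Rabs_pos (fst p - fst q)). pose proof (Rabs_pos (snd p - snd q)).
  destruct p as [x y], q as [x' y']; simpl in *. f_equal.
  - apply Rminus_diag_uniq, Rabs_eq_0. lra.
  - apply Rminus_diag_uniq, Rabs_eq_0. lra.
Qed.

Lemma norm1_ge0 p : 0 <= norm1 p.
Proof. unfold norm1. pose proof (Rabs_pos (fst p)). pose proof (Rabs_pos (snd p)). lra. Qed.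

Lemma cont2_at_dist1 g t : cont2_at g t <->
  forall e, 0 < e -> exists d, 0 < d /\ forall s, Rabs (s - t) < d -> dist1 (g s) (g t) < e.
Proof.
  split.
  - intros [H1 H2] e He. destruct (H1 (e / 2)) as [d1 [Hd1 Hs1]]; [lra |].
    destruct (H2 (e / 2)) as [d2 [Hd2 Hs2]]; [lra |].
    exists (Rmin d1 d2). split; [apply Rmin_pos; assumption |]. intros s Hs. unfold dist1.
    pose proof (Hs1 s (Rlt_le_trans _ _ _ Hs (Rmin_l _ _))).
    pose proof (Hs2 s (Rlt_le_trans _ _ _ Hs (Rmin_r _ _))). lra.
  - intros H. split; intros e He; destruct (H e He) as [d [Hd Hs]]; exists d; split; auto;
      intros s Hs'; specialize (Hs s Hs'); unfold dist1 in Hs;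
      pose proof (Rabs_pos (fst (g s) - fst (g t))); pose proof (Rabs_pos (snd (g s) - snd (g t))); lra.
Qed.

Lemma cont2_at_lipschitz f K g t : 0 <= K -> lipschitz1 f K -> cont2_at g t ->
  cont2_at (fun s => f (g s)) t.
Proof.
  intros HK Hf Hg. apply cont2_at_dist1. rewrite cont2_at_dist1 in Hg. intros e He.
  destruct (Hg (e / (K + 1))) as [d [Hd Hs]]; [apply Rdiv_lt_0_compat; lra |].
  exists d. split; [assumption |]. intros s Hst. eapply Rle_lt_trans; [apply Hf |].
  specialize (Hs s Hst). pose proof (dist1_ge0 (g s) (g t)).
  apply Rle_lt_trans with ((K + 1) * dist1 (g s) (g t)); [nra |].
  apply Rmult_lt_reg_l with (/ (K + 1)); [apply Rinv_0_lt_compat; lra |].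
  rewrite <- Rmult_assoc, Rinv_l, Rmult_1_l by lra. rewrite Rmult_comm. exact Hs.
Qed.

Lemma cont2_at_Rmax0 g t : (forall s, cont2_at g s) -> cont2_at (fun s => g (Rmax 0 s)) t.
Proof.
  intros Hg. apply cont2_at_dist1. intros e He. destruct (proj1 (cont2_at_dist1 g (Rmax 0 t)) (Hg _) e He) as [d [Hd Hs]].
  exists d. split; [assumption |]. intros s Hst. apply Hs.
  eapply Rle_lt_trans; [| exact Hst].
  unfold Rmax; destruct (Rle_dec 0 s), (Rle_dec 0 t); unfold Rabs; repeat destruct Rcase_abs; lra.
Qed.

Definition integral_path (p : R * R) (g : R -> R * R) (t : R) : R * R :=
  (fst p + RInt (fun s => fst (g s)) 0 t, snd p + RInt (fun s => snd (g s)) 0 t).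

Section IntegralPath.

Variables (p : R * R) (g : R -> R * R).
Hypothesis g_cont : forall x, cont2_at g x.

Lemma integral_path_0 : integral_path p g 0 = p.
Proof.
  unfold integral_path. rewrite !(RInt_point (V := R_CompleteNormedModule)).
  unfold zero; simpl. rewrite !Rplus_0_r. destruct p; reflexivity.
Qed.

Lemma integral_path_cont t : cont2_at (integral_path p g) t.
Proof.
  split; unfold integral_path; simpl; apply cont_at_plus; try apply cont_at_const;
    apply cont_at_RInt; intros x; apply g_cont.
Qed.

Lemma integral_path_derivable t :
  derivable_pt_lim (fun s => fst (integral_path p g s)) t (fst (g t)) /\
  derivable_pt_lim (fun s => snd (integral_path p g s)) t (snd (g t)).
Proof.
  unfold integral_path; simpl. split.
  - rewrite <- (Rplus_0_l (fst (g t))). apply derivable_pt_lim_plus; [apply derivable_pt_lim_const |].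
    apply is_derive_Reals, (is_derive_RInt_cont (fun s => fst (g s))). intros x; apply g_cont.
  - rewrite <- (Rplus_0_l (snd (g t))). apply derivable_pt_lim_plus; [apply derivable_pt_lim_const |].
    apply is_derive_Reals, (is_derive_RInt_cont (fun s => snd (g s))). intros x; apply g_cont.
Qed.

Variable h : R -> R * R.
Hypothesis h_cont : forall x, cont2_at h x.

Lemma dist1_integral_path t : 0 <= t ->
  dist1 (integral_path p g t) (integral_path p h t) <= RInt (fun s => dist1 (g s) (h s)) 0 t.
Proof.
  intros Ht. unfold integral_path, dist1; simpl.
  assert (Hex : forall (u : R -> R), (forall x, cont_at u x) -> ex_RInt u 0 t)
    by (intros; apply ex_RInt_cont; assumption).
  assert (E : forall (u v : R -> R), (forall x, cont_at u x) -> (forall x, cont_at v x) ->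
             forall c, c + RInt u 0 t - (c + RInt v 0 t) = RInt (fun s => u s - v s) 0 t).
  { intros u v Hu Hv c. rewrite RInt_minus_R by auto. ring. }
  rewrite !E by (intros; first [apply g_cont | apply h_cont]).
  rewrite RInt_plus_R by (apply Hex; intros; apply cont_at_abs, cont_at_minus;
                           first [apply g_cont | apply h_cont]).
  apply Rplus_le_compat; apply abs_RInt_le; try assumption;
    apply Hex; intros; apply cont_at_minus; first [apply g_cont | apply h_cont].
Qed.

End IntegralPath.

Lemma cont_at_dist1 g h x : cont2_at g x -> cont2_at h x -> cont_at (fun s => dist1 (g s) (h s)) x.
Proof.
  intros [G1 G2] [H1 H2]. unfold dist1.
  apply cont_at_plus; apply cont_at_abs, cont_at_minus; assumption.
Qed.

Section Picard.

Variables (f : R * R -> R * R) (K : R) (p : R * R).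
Hypotheses (K_pos : 0 < K) (f_lip : lipschitz1 f K).

Fixpoint picard (n : nat) : R -> R * R :=
  match n with
  | O => fun _ => p
  | S n => integral_path p (fun s => f (picard n (Rmax 0 s)))
  end.

Lemma picard_integrand_cont (u : R -> R * R) :
  (forall x, cont2_at u x) -> forall x, cont2_at (fun s => f (u (Rmax 0 s))) x.
Proof.
  intros Hu x. apply cont2_at_lipschitz with K; [lra | assumption |]. apply cont2_at_Rmax0, Hu.
Qed.

Lemma picard_cont n : forall x, cont2_at (picard n) x.
Proof.
  induction n as [| n IH]; intros x.
  - split; exact (cont_at_const _ x).
  - apply integral_path_cont, picard_integrand_cont, IH.
Qed.

Definition picard_rate t := norm1 (f p) / K * exp (2 * K * t).

Lemma picard_rate_ge0 t : 0 <= picard_rate t.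
Proof.
  unfold picard_rate. pose proof (norm1_ge0 (f p)). pose proof (exp_pos (2 * K * t)).
  apply Rmult_le_pos; [apply Rdiv_le_0_compat |]; lra.
Qed.

Lemma picard_rate_le s t : s <= t -> picard_rate s <= picard_rate t.
Proof.
  intros Hst. unfold picard_rate. pose proof (norm1_ge0 (f p)).
  apply Rmult_le_compat_l; [apply Rdiv_le_0_compat; lra |].
  destruct (Rle_lt_or_eq_dec _ _ Hst) as [Hlt | ->]; [| lra].
  left. apply exp_increasing. nra.
Qed.

(* The iterates contract by a factor 2 because of the weight [exp (2 K t)]. *)
Lemma picard_step n t : 0 <= t ->
  dist1 (picard (S n) t) (picard n t) <= picard_rate t * (/ 2) ^ S n.
Proof.
  unfold picard_rate. revert t. induction n as [| n IH]; intros t Ht.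
  - simpl picard. unfold integral_path, dist1, norm1; simpl.
    rewrite !RInt_const_R.
    replace (fst p + (t - 0) * fst (f p) - fst p) with (t * fst (f p)) by ring.
    replace (snd p + (t - 0) * snd (f p) - snd p) with (t * snd (f p)) by ring.
    rewrite !Rabs_mult, (Rabs_right t) by lra.
    assert (Hexp : 2 * K * t <= exp (2 * K * t)).
    { destruct (Req_dec t 0) as [-> | Ht0]; [rewrite Rmult_0_r, exp_0; lra |].
      pose proof (exp_ineq1 (2 * K * t)). assert (0 < 2 * K * t) by nra. lra. }
    pose proof (Rabs_pos (fst (f p))). pose proof (Rabs_pos (snd (f p))).
    apply Rmult_le_reg_l with (2 * K); [lra |].
    replace (2 * K * ((Rabs (fst (f p)) + Rabs (snd (f p))) / K * exp (2 * K * t) * (/ 2 * 1)))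
      with ((Rabs (fst (f p)) + Rabs (snd (f p))) * exp (2 * K * t)) by (field; lra).
    nra.
  - set (c := norm1 (f p) / K * (/ 2) ^ S n).
    assert (Hc : 0 <= c).
    { unfold c. pose proof (norm1_ge0 (f p)). pose proof (pow_le (/ 2) (S n) ltac:(lra)).
      apply Rmult_le_pos; [apply Rdiv_le_0_compat |]; lra. }
    eapply Rle_trans; [exact (dist1_integral_path p _ (picard_integrand_cont _ (picard_cont (S n)))
                                 _ (picard_integrand_cont _ (picard_cont n)) t Ht) |].
    eapply Rle_trans.
    { apply RInt_le with (g := fun s => K * c * exp (2 * K * s)); [assumption | | |].
      - apply ex_RInt_cont. intros x. apply cont_at_dist1; apply picard_integrand_cont, picard_cont.
      - apply ex_RInt_cont. intros x. apply cont_at_mult; [apply cont_at_const |].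
        apply continuous_cont_at, continuous_exp_comp, cont_at_continuous.
        apply cont_at_mult; [apply cont_at_const | intros e He; exists e; split; auto].
      - intros s Hs. rewrite Rmax_right by lra. eapply Rle_trans; [apply f_lip |].
        replace (K * c * exp (2 * K * s))
          with (K * (norm1 (f p) / K * exp (2 * K * s) * (/ 2) ^ S n)) by (unfold c; ring).
        apply Rmult_le_compat_l; [lra |]. apply IH. lra. }
    rewrite RInt_scal_exp by lra. unfold c.
    pose proof (exp_pos (2 * K * t)). pose proof (norm1_ge0 (f p)). pose proof (pow_lt (/ 2) n ltac:(lra)).
    simpl pow. apply Rmult_le_reg_l with (2 * K); [lra |]. field_simplify; [| lra | lra].
    assert (0 <= norm1 (f p) * (/ 2) ^ n) by (apply Rmult_le_pos; lra). nra.
Qed.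

Lemma picard_cauchy n m t : 0 <= t -> (n <= m)%nat ->
  dist1 (picard m t) (picard n t) <= picard_rate t * ((/ 2) ^ n - (/ 2) ^ m).
Proof.
  intros Ht Hnm. induction Hnm as [| m Hnm IH].
  - unfold dist1. rewrite !Rminus_diag, Rabs_R0. lra.
  - eapply Rle_trans; [apply dist1_triangle with (q := picard m t) |].
    pose proof (picard_step m t Ht). simpl pow in *. lra.
Qed.

Definition picard_limit t : R * R :=
  (real (Lim_seq (fun n => fst (picard n (Rmax 0 t)))),
   real (Lim_seq (fun n => snd (picard n (Rmax 0 t))))).

Lemma geom_half_small c : 0 < c -> exists N, forall n, (n >= N)%nat -> (/ 2) ^ n < c.
Proof.
  intros Hc. destruct (pow_lt_1_zero (/ 2)) with (y := c) as [N HN]; auto.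
  - rewrite Rabs_right; lra.
  - exists N. intros n Hn. specialize (HN n Hn).
    rewrite Rabs_right in HN; [assumption | apply Rle_ge, pow_le; lra].
Qed.

Lemma Un_cv_Lim_seq (u : nat -> R) : Cauchy_crit u -> Un_cv u (real (Lim_seq u)).
Proof.
  intros H. destruct (Rcomplete.R_complete u H) as [l Hl].
  rewrite (is_lim_seq_unique u l) by (apply is_lim_seq_Reals; assumption). exact Hl.
Qed.

Lemma picard_cv t :
  Un_cv (fun n => fst (picard n (Rmax 0 t))) (fst (picard_limit t)) /\
  Un_cv (fun n => snd (picard n (Rmax 0 t))) (snd (picard_limit t)).
Proof.
  set (t' := Rmax 0 t). assert (Ht' : 0 <= t') by apply Rmax_l.
  pose proof (picard_rate_ge0 t') as HB. set (B := picard_rate t') in HB |- *.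
  assert (Hc : forall e, 0 < e -> exists N, forall n m, (n >= N)%nat -> (m >= N)%nat ->
                 dist1 (picard n t') (picard m t') < e).
  { intros e He. destruct (geom_half_small (e / (B + 1))) as [N HN]; [apply Rdiv_lt_0_compat; lra |].
    exists N.
    assert (Hle : forall i j, (i >= N)%nat -> (i <= j)%nat -> dist1 (picard j t') (picard i t') < e).
    { intros i j Hi Hij. eapply Rle_lt_trans; [apply picard_cauchy; assumption |]. fold B.
      specialize (HN i Hi). pose proof (pow_lt (/ 2) j ltac:(lra)).
      apply Rle_lt_trans with (B * (e / (B + 1))); [nra |].
      apply Rmult_lt_reg_r with (B + 1); [lra |].
      replace (B * (e / (B + 1)) * (B + 1)) with (B * e) by (field; lra). nra. }
    intros n m Hn Hm. destruct (Nat.le_ge_cases n m).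
    - rewrite dist1_sym. apply Hle; assumption.
    - apply Hle; assumption. }
  split; apply Un_cv_Lim_seq; intros e He; destruct (Hc e He) as [N HN]; exists N;
    intros n m Hn Hm; specialize (HN n m Hn Hm); unfold dist1, Rdist in *;
    pose proof (Rabs_pos (fst (picard n t') - fst (picard m t')));
    pose proof (Rabs_pos (snd (picard n t') - snd (picard m t'))); lra.
Qed.

Lemma dist1_Un_cv_le (u v : nat -> R) l1 l2 c B n : Un_cv u l1 -> Un_cv v l2 ->
  (forall m, (m >= n)%nat -> dist1 (u m, v m) c <= B) -> dist1 (l1, l2) c <= B.
Proof.
  intros Hu Hv Hb. unfold dist1 in *; simpl in *.
  destruct (Rle_dec (Rabs (l1 - fst c) + Rabs (l2 - snd c)) B) as [| Hn]; [assumption | exfalso].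
  set (e := (Rabs (l1 - fst c) + Rabs (l2 - snd c) - B) / 2).
  assert (He : 0 < e) by (unfold e; lra).
  destruct (Hu e He) as [N1 HN1]. destruct (Hv e He) as [N2 HN2].
  set (m := (N1 + N2 + n)%nat).
  specialize (HN1 m ltac:(unfold m; lia)). specialize (HN2 m ltac:(unfold m; lia)).
  specialize (Hb m ltac:(unfold m; lia)). unfold Rdist in *.
  pose proof (Rabs_triang (u m - fst c) (l1 - u m)). pose proof (Rabs_triang (v m - snd c) (l2 - v m)).
  replace (u m - fst c + (l1 - u m)) with (l1 - fst c) in * by ring.
  replace (v m - snd c + (l2 - v m)) with (l2 - snd c) in * by ring.
  rewrite Rabs_minus_sym in HN1, HN2. unfold e in *. lra.
Qed.

Lemma picard_limit_close n t :
  dist1 (picard_limit t) (picard n (Rmax 0 t)) <= picard_rate (Rmax 0 t) * (/ 2) ^ n.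
Proof.
  destruct (picard_cv t) as [H1 H2]. destruct (picard_limit t) as [l1 l2] eqn:E; simpl in H1, H2.
  apply (dist1_Un_cv_le _ _ _ _ _ _ n H1 H2). intros m Hm.
  rewrite <- surjective_pairing.
  eapply Rle_trans; [apply picard_cauchy; [apply Rmax_l | exact Hm] |].
  pose proof (picard_rate_ge0 (Rmax 0 t)). pose proof (pow_le (/ 2) m ltac:(lra)). nra.
Qed.

Lemma picard_limit_cont t : cont2_at picard_limit t.
Proof.
  apply cont2_at_dist1. intros e He.
  pose proof (picard_rate_ge0 (Rabs t + 1)) as HB. set (B := picard_rate (Rabs t + 1)) in HB |- *.
  destruct (geom_half_small (e / 3 / (B + 1))) as [n Hn]; [apply Rdiv_lt_0_compat; lra |].
  specialize (Hn n (Nat.le_refl n)).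
  assert (HBn : B * (/ 2) ^ n < e / 3).
  { pose proof (pow_lt (/ 2) n ltac:(lra)).
    apply Rle_lt_trans with (B * (e / 3 / (B + 1))); [nra |].
    apply Rmult_lt_reg_r with (B + 1); [lra |].
    replace (B * (e / 3 / (B + 1)) * (B + 1)) with (B * (e / 3)) by (field; lra). nra. }
  assert (Hclose : forall s, Rabs (s - t) < 1 -> dist1 (picard_limit s) (picard n (Rmax 0 s)) <= B * (/ 2) ^ n).
  { intros s Hs. eapply Rle_trans; [apply picard_limit_close |].
    apply Rmult_le_compat_r; [apply pow_le; lra |]. apply picard_rate_le.
    unfold Rmax; destruct (Rle_dec 0 s); unfold Rabs in *; repeat destruct Rcase_abs; lra. }
  destruct (proj1 (cont2_at_dist1 _ t) (cont2_at_Rmax0 (picard n) t (picard_cont n)) (e / 3))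
    as [d [Hd Hsd]]; [lra |].
  exists (Rmin d 1). split; [apply Rmin_pos; lra |]. intros s Hs.
  assert (Q1 := Hclose s (Rlt_le_trans _ _ _ Hs (Rmin_r _ _))).
  assert (Q2 := Hclose t ltac:(rewrite Rminus_diag, Rabs_R0; lra)). rewrite dist1_sym in Q2.
  assert (Q3 := Hsd s (Rlt_le_trans _ _ _ Hs (Rmin_l _ _))).
  pose proof (dist1_triangle (picard_limit s) (picard n (Rmax 0 s)) (picard_limit t)).
  pose proof (dist1_triangle (picard n (Rmax 0 s)) (picard n (Rmax 0 t)) (picard_limit t)). lra.
Qed.

Lemma eq0_of_le_geom x c : (forall n, x <= c * (/ 2) ^ n) -> 0 <= x -> x = 0.
Proof.
  intros Hx Hx0. destruct (Req_dec x 0) as [| Hne]; [assumption | exfalso].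
  destruct (geom_half_small (x / (Rabs c + 1))) as [n Hn]; [apply Rdiv_lt_0_compat; pose proof (Rabs_pos c); lra |].
  specialize (Hn n (Nat.le_refl n)). specialize (Hx n). pose proof (Rabs_pos c). pose proof (Rle_abs c).
  pose proof (pow_lt (/ 2) n ltac:(lra)).
  assert (Rabs c * (/ 2) ^ n < x).
  { apply Rle_lt_trans with ((Rabs c + 1) * (/ 2) ^ n); [nra |].
    apply Rmult_lt_reg_l with (/ (Rabs c + 1)); [apply Rinv_0_lt_compat; lra |].
    rewrite <- Rmult_assoc, Rinv_l, Rmult_1_l by lra. rewrite Rmult_comm. exact Hn. }
  nra.
Qed.

Definition picard_flow := integral_path p (fun s => f (picard_limit (Rmax 0 s))).

Lemma picard_limit_fixpoint t : 0 <= t -> picard_limit t = picard_flow t.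
Proof.
  intros Ht. pose proof (picard_rate_ge0 t) as HB. set (B := picard_rate t) in HB |- *.
  apply dist1_eq0, (eq0_of_le_geom _ (B / 2 + t * K * B)); [| apply dist1_ge0].
  intros n. eapply Rle_trans; [apply dist1_triangle with (q := picard (S n) t) |].
  assert (A1 : dist1 (picard_limit t) (picard (S n) t) <= B / 2 * (/ 2) ^ n).
  { rewrite <- (Rmax_right 0 t) at 2 by lra. eapply Rle_trans; [apply picard_limit_close |].
    rewrite Rmax_right by lra. fold B. simpl pow. right; field. }
  assert (A2 : dist1 (picard (S n) t) (picard_flow t) <= t * K * B * (/ 2) ^ n).
  { unfold picard_flow. simpl picard.
    eapply Rle_trans; [exact (dist1_integral_path p _ (picard_integrand_cont _ (picard_cont n))
                                 _ (picard_integrand_cont _ picard_limit_cont) t Ht) |].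
    eapply Rle_trans.
    { apply RInt_le with (g := fun _ => K * (B * (/ 2) ^ n)); [assumption | | apply ex_RInt_cont; intros; apply cont_at_const |].
      - apply ex_RInt_cont. intros x. apply cont_at_dist1; apply picard_integrand_cont;
          [apply picard_cont | apply picard_limit_cont].
      - intros s Hs. rewrite Rmax_right by lra. eapply Rle_trans; [apply f_lip |].
        apply Rmult_le_compat_l; [lra |]. rewrite dist1_sym.
        replace (picard n s) with (picard n (Rmax 0 s)) by (rewrite Rmax_right by lra; reflexivity).
        eapply Rle_trans; [apply picard_limit_close |]. rewrite (Rmax_right 0 s) by lra.
        apply Rmult_le_compat_r; [apply pow_le; lra | apply picard_rate_le; lra]. }
    rewrite RInt_const_R. lra. }
  lra.
Qed.

Theorem picard_flow_spec :
  picard_flow 0 = p /\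
  forall t, 0 <= t -> derivable_pt_lim (fun s => fst (picard_flow s)) t (fst (f (picard_flow t))) /\
                     derivable_pt_lim (fun s => snd (picard_flow s)) t (snd (f (picard_flow t))).
Proof.
  assert (Hcont := picard_integrand_cont _ picard_limit_cont).
  split; [apply integral_path_0 |]. intros t Ht.
  replace (f (picard_flow t)) with (f (picard_limit (Rmax 0 t)))
    by (rewrite Rmax_right, picard_limit_fixpoint by assumption; reflexivity).
  apply (integral_path_derivable p _ Hcont).
Qed.

End Picard.

Lemma lipschitz_flow_exists f K p : 0 < K -> lipschitz1 f K ->
  exists phi : R -> R * R, phi 0 = p /\
    forall t, 0 <= t -> derivable_pt_lim (fun s => fst (phi s)) t (fst (f (phi t))) /\
                       derivable_pt_lim (fun s => snd (phi s)) t (snd (f (phi t))).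
Proof. intros HK Hf. exists (picard_flow f p). apply (picard_flow_spec f K); assumption. Qed.

(** * Gronwall estimates *)

Lemma nonincreasing_of_deriv_nonpos (g : R -> R) a b : a < b ->
  (forall s, a <= s <= b -> exists l, derivable_pt_lim g s l /\ l <= 0) -> g b <= g a.
Proof.
  intros Hab Hd.
  destruct (MVT_gen g a b (Derive g)) as [c [Hc E]].
  - intros x Hx. rewrite Rmin_left, Rmax_right in Hx by lra.
    destruct (Hd x ltac:(lra)) as [l [Hl _]]. apply Derive_correct. exists l. apply is_derive_Reals, Hl.
  - intros x Hx. rewrite Rmin_left, Rmax_right in Hx by lra.
    destruct (Hd x ltac:(lra)) as [l [Hl _]]. apply derivable_continuous_pt. exists l. exact Hl.
  - rewrite Rmin_left, Rmax_right in Hc by lra. simpl in E.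
    destruct (Hd c Hc) as [l [Hl Hl0]].
    rewrite (is_derive_unique g c l) in E by (apply is_derive_Reals; assumption). nra.
Qed.

Definition right_cont (N : R -> R) t0 :=
  forall e, 0 < e -> exists d, 0 < d /\ forall h, 0 < h < d -> Rabs (N (t0 + h) - N t0) < e.

Lemma right_cont_of_cont_at f t : cont_at f t -> right_cont f t.
Proof.
  intros H e He. destruct (H e He) as [d [Hd Hs]]. exists d. split; [assumption |]. intros h Hh.
  apply Hs. replace (t + h - t) with h by ring. rewrite Rabs_right; lra.
Qed.

Lemma right_cont_of_right_deriv f t l : right_deriv f t l -> right_cont f t.
Proof.
  intros H e He. destruct (H 1 Rlt_0_1) as [d [Hd Hh]]. pose proof (Rabs_pos l).
  exists (Rmin d (e / (Rabs l + 2))). split; [apply Rmin_pos; [| apply Rdiv_lt_0_compat]; lra |].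
  intros h Hh'. pose proof (Rmin_l d (e / (Rabs l + 2))). pose proof (Rmin_r d (e / (Rabs l + 2))).
  specialize (Hh h ltac:(lra)).
  replace (f (t + h) - f t) with (h * ((f (t + h) - f t) / h)) by (field; lra).
  rewrite Rabs_mult, (Rabs_right h) by lra.
  assert (Rabs ((f (t + h) - f t) / h) < Rabs l + 1)
    by (pose proof (Rabs_triang_inv ((f (t + h) - f t) / h) l); lra).
  apply Rle_lt_trans with (h * (Rabs l + 1)); [apply Rmult_le_compat_l; lra |].
  apply Rlt_le_trans with (e / (Rabs l + 2) * (Rabs l + 2)); [nra |].
  right; field; lra.
Qed.

Lemma gronwall (N : R -> R) c t0 t1 : 0 <= c -> t0 < t1 ->
  (forall t, t0 < t < t1 -> 0 <= N t /\ exists l, derivable_pt_lim N t l /\ l <= c * N t) ->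
  right_cont N t0 ->
  forall t, t0 < t < t1 -> N t <= exp (c * (t - t0)) * N t0.
Proof.
  intros Hc Ht01 Hd Hr t Ht.
  assert (Hmono : forall h, 0 < h < t - t0 -> N t <= exp (c * (t - (t0 + h))) * N (t0 + h)).
  { intros h Hh. set (g := fun s => exp (- c * s) * N s).
    assert (Hg : g t <= g (t0 + h)).
    { apply nonincreasing_of_deriv_nonpos; [lra |]. intros s Hs.
      destruct (Hd s ltac:(lra)) as [HN [l [Hl Hle]]].
      exists (- c * exp (- c * s) * N s + exp (- c * s) * l). split.
      - unfold g. apply (derivable_pt_lim_mult (fun s => exp (- c * s)) N s); [| assumption].
        apply is_derive_Reals. auto_derive; [exact I | ring].
      - pose proof (exp_pos (- c * s)). nra. }
    unfold g in Hg.
    replace (exp (c * (t - (t0 + h)))) with (exp (c * t) * exp (- c * (t0 + h)))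
      by (rewrite <- exp_plus; f_equal; ring).
    apply Rmult_le_reg_l with (exp (- c * t)); [apply exp_pos |].
    replace (exp (- c * t) * (exp (c * t) * exp (- c * (t0 + h)) * N (t0 + h)))
      with ((exp (- c * t) * exp (c * t)) * (exp (- c * (t0 + h)) * N (t0 + h))) by ring.
    rewrite <- exp_plus. replace (- c * t + c * t) with 0 by ring. rewrite exp_0. lra. }
  destruct (Rle_dec (N t) (exp (c * (t - t0)) * N t0)) as [| Hn]; [assumption | exfalso].
  apply Rnot_le_lt in Hn.
  set (E := exp (c * (t - t0))) in Hn. assert (HE : 0 < E) by apply exp_pos.
  set (gap := N t - E * N t0).
  destruct (Hr (gap / (2 * E))) as [d [Hd0 Hdh]]; [unfold gap; apply Rdiv_lt_0_compat; lra |].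
  set (h := Rmin (d / 2) ((t - t0) / 2)).
  pose proof (Rmin_l (d / 2) ((t - t0) / 2)). pose proof (Rmin_r (d / 2) ((t - t0) / 2)).
  assert (Hh : 0 < h) by (apply Rmin_pos; lra). fold h in H, H0.
  specialize (Hmono h ltac:(lra)). specialize (Hdh h ltac:(lra)).
  destruct (Hd (t0 + h) ltac:(lra)) as [HNh _].
  assert (exp (c * (t - (t0 + h))) <= E).
  { unfold E. destruct (Req_dec c 0) as [-> | Hc0]; [rewrite !Rmult_0_l; lra |].
    left; apply exp_increasing, Rmult_lt_compat_l; lra. }
  assert (N (t0 + h) < N t0 + gap / (2 * E)) by (pose proof (Rle_abs (N (t0 + h) - N t0)); lra).
  assert (N t <= E * N (t0 + h)) by (eapply Rle_trans; [apply Hmono | apply Rmult_le_compat_r; lra]).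
  assert (E * N (t0 + h) < E * (N t0 + gap / (2 * E))) by (apply Rmult_lt_compat_l; lra).
  assert (E * (N t0 + gap / (2 * E)) = E * N t0 + gap / 2) by (field; lra).
  unfold gap in *. lra.
Qed.

Definition sqdist (p q : R * R) := (fst p - fst q) ^ 2 + (snd p - snd q) ^ 2.

Lemma sqdist_ge0 p q : 0 <= sqdist p q.
Proof. unfold sqdist. pose proof (pow2_ge_0 (fst p - fst q)). pose proof (pow2_ge_0 (snd p - snd q)). lra. Qed.

Lemma sqdist_dist2 p q : sqdist p q = dist2 p q ^ 2.
Proof. unfold dist2. rewrite <- Rsqr_pow2, Rsqr_sqrt by apply sqdist_ge0. reflexivity. Qed.

Lemma sqdist_le_components p q c : 0 <= c -> sqdist p q <= c ^ 2 ->
  Rabs (fst p - fst q) <= c /\ Rabs (snd p - snd q) <= c.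
Proof.
  unfold sqdist. intros Hc H. pose proof (pow2_ge_0 (fst p - fst q)). pose proof (pow2_ge_0 (snd p - snd q)).
  split; rewrite <- (Rabs_pos_eq c Hc); apply Rsqr_le_abs_0; unfold Rsqr; nra.
Qed.

Lemma sqdist_le0 p q : sqdist p q <= 0 -> p = q.
Proof.
  intros H. destruct (sqdist_le_components p q 0 (Rle_refl 0) ltac:(simpl; lra)) as [A B].
  destruct p, q; simpl in *. f_equal; apply Rminus_diag_uniq, Rabs_eq_0;
    [pose proof (Rabs_pos (r - r1)) | pose proof (Rabs_pos (r0 - r2))]; lra.
Qed.

Lemma cont_at_sqdist (u v : R -> R * R) t : cont2_at u t -> cont2_at v t ->
  cont_at (fun s => sqdist (u s) (v s)) t.
Proof.
  intros [U1 U2] [V1 V2]. unfold sqdist. simpl.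
  apply cont_at_plus; apply cont_at_mult; try (apply cont_at_mult; [| apply cont_at_const]);
    apply cont_at_minus; assumption.
Qed.

Definition deriv_along (u : R -> R * R) (F : R * R -> R * R) t :=
  derivable_pt_lim (fun s => fst (u s)) t (fst (F (u t))) /\
  derivable_pt_lim (fun s => snd (u s)) t (snd (F (u t))).

Lemma cont2_at_deriv_along u F t : deriv_along u F t -> cont2_at u t.
Proof. intros [D1 D2]. split; eapply cont_at_derivable; eassumption. Qed.

Lemma deriv_along_shift u F t0 s : deriv_along u F (t0 + s) -> deriv_along (fun x => u (t0 + x)) F s.
Proof.
  intros [D1 D2]. unfold deriv_along.
  assert (Hs : derivable_pt_lim (fun x => t0 + x) s 1).
  { apply is_derive_Reals. auto_derive; [exact I | ring]. }
  split.
  - pose proof (derivable_pt_lim_comp _ (fun y => fst (u y)) s _ _ Hs D1) as H.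
    rewrite Rmult_1_r in H. exact H.
  - pose proof (derivable_pt_lim_comp _ (fun y => snd (u y)) s _ _ Hs D2) as H.
    rewrite Rmult_1_r in H. exact H.
Qed.

Lemma sqdist_derivable u v F G t : deriv_along u F t -> deriv_along v G t ->
  derivable_pt_lim (fun s => sqdist (u s) (v s)) t
    (2 * ((fst (u t) - fst (v t)) * (fst (F (u t)) - fst (G (v t))) +
          (snd (u t) - snd (v t)) * (snd (F (u t)) - snd (G (v t))))).
Proof.
  intros [U1 U2] [V1 V2]. unfold sqdist.
  pose proof (derivable_pt_lim_minus _ _ t _ _ U1 V1) as A.
  pose proof (derivable_pt_lim_minus _ _ t _ _ U2 V2) as B.
  pose proof (derivable_pt_lim_plus _ _ t _ _ (derivable_pt_lim_mult _ _ t _ _ A A)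
                (derivable_pt_lim_mult _ _ t _ _ B B)) as C.
  unfold plus_fct, mult_fct, minus_fct in C.
  apply is_derive_Reals. apply (is_derive_ext (fun s =>
    (fst (u s) - fst (v s)) * (fst (u s) - fst (v s)) + (snd (u s) - snd (v s)) * (snd (u s) - snd (v s)))).
  { intros s. unfold sqdist. simpl. ring. }
  apply is_derive_Reals.
  replace (2 * ((fst (u t) - fst (v t)) * (fst (F (u t)) - fst (G (v t))) +
                (snd (u t) - snd (v t)) * (snd (F (u t)) - snd (G (v t))))) with (((fst (F (u t)) - fst (G (v t))) * (fst (u t) - fst (v t)) +
     (fst (u t) - fst (v t)) * (fst (F (u t)) - fst (G (v t))) +
     ((snd (F (u t)) - snd (G (v t))) * (snd (u t) - snd (v t)) +
      (snd (u t) - snd (v t)) * (snd (F (u t)) - snd (G (v t)))))) by ring.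
  exact C.
Qed.

Lemma sqdist_gronwall (u v : R -> R * R) (F G : R * R -> R * R) c D t0 t1 :
  0 <= c -> 0 <= D -> t0 < t1 ->
  (forall t, t0 < t < t1 -> deriv_along u F t /\ deriv_along v G t /\
     2 * ((fst (u t) - fst (v t)) * (fst (F (u t)) - fst (G (v t))) +
          (snd (u t) - snd (v t)) * (snd (F (u t)) - snd (G (v t))))
       <= c * (sqdist (u t) (v t) + D)) ->
  right_cont (fun s => sqdist (u s) (v s)) t0 ->
  forall t, t0 < t < t1 -> sqdist (u t) (v t) + D <= exp (c * (t - t0)) * (sqdist (u t0) (v t0) + D).
Proof.
  intros Hc HD Ht Hd Hr.
  apply (gronwall (fun s => sqdist (u s) (v s) + D) c t0 t1 Hc Ht).
  - intros s Hs. destruct (Hd s Hs) as [Du [Dv Hle]]. split; [pose proof (sqdist_ge0 (u s) (v s)); lra |].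
    eexists. split; [| exact Hle].
    rewrite <- (Rplus_0_r (2 * _)). apply derivable_pt_lim_plus;
      [apply sqdist_derivable; assumption | apply derivable_pt_lim_const].
  - intros e He. destruct (Hr e He) as [d [Hd0 Hh]]. exists d. split; [assumption |]. intros h Hh'.
    replace (sqdist (u (t0 + h)) (v (t0 + h)) + D - (sqdist (u t0) (v t0) + D))
      with (sqdist (u (t0 + h)) (v (t0 + h)) - sqdist (u t0) (v t0)) by ring. auto.
Qed.

(** * The clamped field *)

Definition in_box r (p : R * R) := Rabs (fst p) <= r /\ Rabs (snd p) <= r.

Definition lipschitz_on_box (M : R * R -> R * R) r dl := forall p q, in_box r p -> in_box r q ->
  Rabs (fst (M p) - fst (M q)) <= dl * dist1 p q /\ Rabs (snd (M p) - snd (M q)) <= dl * dist1 p q.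

Definition clamp r x := Rmax (- r) (Rmin r x).
Definition clamp2 r (p : R * R) := (clamp r (fst p), clamp r (snd p)).

(* Freezing [M] outside the box [in_box r] makes the field globally Lipschitz. *)
Definition clamped_field a b (M : R * R -> R * R) r (p : R * R) : R * R :=
  (a * fst p - b * snd p + fst (M (clamp2 r p)), b * fst p + a * snd p + snd (M (clamp2 r p))).

Lemma clamp_lipschitz r x y : 0 <= r -> Rabs (clamp r x - clamp r y) <= Rabs (x - y).
Proof. intros. unfold clamp, Rmax, Rmin. repeat destruct Rle_dec; unfold Rabs; repeat destruct Rcase_abs; lra. Qed.

Lemma clamp_bound r x : 0 <= r -> Rabs (clamp r x) <= r.
Proof. intros. unfold clamp, Rmax, Rmin. repeat destruct Rle_dec; unfold Rabs; repeat destruct Rcase_abs; lra. Qed.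

Lemma clamp_id r x : Rabs x <= r -> clamp r x = x.
Proof. unfold clamp, Rmax, Rmin, Rabs. intros. destruct Rcase_abs; repeat destruct Rle_dec; lra. Qed.

Lemma clamp2_in_box r p : 0 <= r -> in_box r (clamp2 r p).
Proof. intros. split; apply clamp_bound; assumption. Qed.

Lemma clamp2_id r p : in_box r p -> clamp2 r p = p.
Proof. intros [H1 H2]. unfold clamp2. rewrite !clamp_id by assumption. destruct p; reflexivity. Qed.

Lemma dist1_clamp2 r p q : 0 <= r -> dist1 (clamp2 r p) (clamp2 r q) <= dist1 p q.
Proof.
  intros. unfold dist1, clamp2; simpl.
  pose proof (clamp_lipschitz r (fst p) (fst q) H). pose proof (clamp_lipschitz r (snd p) (snd q) H). lra.
Qed.

Lemma clamped_field_in_box a b M r p : in_box r p -> clamped_field a b M r p = field a b M p.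
Proof. intros H. unfold clamped_field, field. rewrite clamp2_id by assumption. reflexivity. Qed.

Lemma deriv_along_field_of_clamped a b M r phi t : in_box r (phi t) ->
  deriv_along phi (clamped_field a b M r) t -> deriv_along phi (field a b M) t.
Proof. intros Hb H. unfold deriv_along. rewrite <- (clamped_field_in_box a b M r (phi t) Hb). exact H. Qed.

Lemma in_box_mono r r' p : r <= r' -> in_box r p -> in_box r' p.
Proof. intros H [A B]. split; lra. Qed.

Section ClampedField.

Variables (a b : R) (M : R * R -> R * R) (r dl : R).
Hypotheses (r_ge0 : 0 <= r) (dl_ge0 : 0 <= dl) (M_lip : lipschitz_on_box M r dl).

Lemma clamped_field_lipschitz : lipschitz1 (clamped_field a b M r) (Rabs a + Rabs b + 2 * dl + 1).
Proof.
  intros u v. destruct (M_lip _ _ (clamp2_in_box r u r_ge0) (clamp2_in_box r v r_ge0)) as [A B].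
  pose proof (dist1_clamp2 r u v r_ge0). unfold dist1 in *; unfold clamped_field; simpl.
  set (X := fst u - fst v). set (Y := snd u - snd v).
  set (P := fst (M (clamp2 r u)) - fst (M (clamp2 r v))).
  set (Q := snd (M (clamp2 r u)) - snd (M (clamp2 r v))).
  replace (a * fst u - b * snd u + fst (M (clamp2 r u)) - (a * fst v - b * snd v + fst (M (clamp2 r v))))
    with (a * X - b * Y + P) by (unfold X, Y, P; ring).
  replace (b * fst u + a * snd u + snd (M (clamp2 r u)) - (b * fst v + a * snd v + snd (M (clamp2 r v))))
    with (b * X + a * Y + Q) by (unfold X, Y, Q; ring).
  fold X Y in H. fold P in A. fold Q in B.
  assert (E1 : Rabs (a * X - b * Y + P) <= Rabs a * Rabs X + Rabs b * Rabs Y + Rabs P).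
  { rewrite <- !Rabs_mult. eapply Rle_trans; [apply Rabs_triang |].
    pose proof (Rabs_triang (a * X) (- (b * Y))). rewrite Rabs_Ropp in H0. unfold Rminus. lra. }
  assert (E2 : Rabs (b * X + a * Y + Q) <= Rabs b * Rabs X + Rabs a * Rabs Y + Rabs Q).
  { rewrite <- !Rabs_mult. eapply Rle_trans; [apply Rabs_triang |].
    pose proof (Rabs_triang (b * X) (a * Y)). lra. }
  pose proof (Rabs_pos X). pose proof (Rabs_pos Y). pose proof (Rabs_pos a). pose proof (Rabs_pos b).
  pose proof (Rabs_pos (fst (clamp2 r u) - fst (clamp2 r v))).
  pose proof (Rabs_pos (snd (clamp2 r u) - snd (clamp2 r v))). nra.
Qed.

Lemma clamped_flow_exists p : exists phi : R -> R * R, phi 0 = p /\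
  forall t, 0 <= t -> deriv_along phi (clamped_field a b M r) t.
Proof.
  apply (lipschitz_flow_exists _ (Rabs a + Rabs b + 2 * dl + 1)); [| exact clamped_field_lipschitz].
  pose proof (Rabs_pos a). pose proof (Rabs_pos b). lra.
Qed.

Hypothesis M_0 : M (0, 0) = (0, 0).

Lemma perturbation_bound p : in_box r p ->
  Rabs (fst (M p)) <= dl * norm1 p /\ Rabs (snd (M p)) <= dl * norm1 p.
Proof.
  intros Hp. assert (Hz : in_box r (0, 0)) by (split; simpl; rewrite Rabs_R0; assumption).
  destruct (M_lip p (0, 0) Hp Hz) as [A B]. rewrite M_0 in A, B. unfold dist1, norm1 in *; simpl in *.
  rewrite !Rminus_0_r in *. split; assumption.
Qed.

Lemma clamped_perturbation_bound p :
  Rabs (fst (M (clamp2 r p))) <= 2 * dl * r /\ Rabs (snd (M (clamp2 r p))) <= 2 * dl * r.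
Proof.
  destruct (perturbation_bound _ (clamp2_in_box r p r_ge0)) as [A B].
  destruct (clamp2_in_box r p r_ge0) as [C D]. unfold norm1 in *.
  assert (dl * (Rabs (fst (clamp2 r p)) + Rabs (snd (clamp2 r p))) <= dl * (2 * r))
    by (apply Rmult_le_compat_l; lra).
  split; lra.
Qed.

End ClampedField.

(* The rotation [b] drops out of [<X, F u - F v>] and the contraction [a <= 0] only helps. *)
Lemma rotation_one_sided_bound a b dl X Y P Q : a <= 0 -> 0 <= dl ->
  Rabs P <= dl * (Rabs X + Rabs Y) -> Rabs Q <= dl * (Rabs X + Rabs Y) ->
  2 * (X * (a * X - b * Y + P) + Y * (b * X + a * Y + Q)) <= 4 * dl * (X ^ 2 + Y ^ 2).
Proof.
  intros Ha Hdl HP HQ.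
  replace (X * (a * X - b * Y + P) + Y * (b * X + a * Y + Q)) with (X * (a * X + P) + Y * (a * Y + Q)) by ring.
  assert (X * P <= Rabs X * (dl * (Rabs X + Rabs Y))).
  { eapply Rle_trans; [apply Rle_abs |]. rewrite Rabs_mult. apply Rmult_le_compat_l; [apply Rabs_pos | assumption]. }
  assert (Y * Q <= Rabs Y * (dl * (Rabs X + Rabs Y))).
  { eapply Rle_trans; [apply Rle_abs |]. rewrite Rabs_mult. apply Rmult_le_compat_l; [apply Rabs_pos | assumption]. }
  assert (Rabs X * Rabs X = X ^ 2) by (rewrite <- Rabs_mult, Rabs_right; [ring | nra]).
  assert (Rabs Y * Rabs Y = Y ^ 2) by (rewrite <- Rabs_mult, Rabs_right; [ring | nra]).
  assert (0 <= dl * ((Rabs X - Rabs Y) ^ 2)) by (apply Rmult_le_pos; [assumption | apply pow2_ge_0]).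
  nra.
Qed.

Lemma clamped_field_one_sided a b M r dl u v : a <= 0 -> 0 <= r -> 0 <= dl -> lipschitz_on_box M r dl ->
  2 * ((fst u - fst v) * (fst (clamped_field a b M r u) - fst (clamped_field a b M r v)) +
       (snd u - snd v) * (snd (clamped_field a b M r u) - snd (clamped_field a b M r v)))
    <= 4 * dl * sqdist u v.
Proof.
  intros Ha Hr Hdl HL. destruct (HL _ _ (clamp2_in_box r u Hr) (clamp2_in_box r v Hr)) as [A B].
  pose proof (dist1_clamp2 r u v Hr).
  assert (dl * dist1 (clamp2 r u) (clamp2 r v) <= dl * dist1 u v) by (apply Rmult_le_compat_l; assumption).
  unfold clamped_field, sqdist, dist1 in *; simpl.
  set (X := fst u - fst v) in *. set (Y := snd u - snd v) in *.
  replace (a * fst u - b * snd u + fst (M (clamp2 r u)) - (a * fst v - b * snd v + fst (M (clamp2 r v))))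
    with (a * X - b * Y + (fst (M (clamp2 r u)) - fst (M (clamp2 r v)))) by (unfold X, Y; ring).
  replace (b * fst u + a * snd u + snd (M (clamp2 r u)) - (b * fst v + a * snd v + snd (M (clamp2 r v))))
    with (b * X + a * Y + (snd (M (clamp2 r u)) - snd (M (clamp2 r v)))) by (unfold X, Y; ring).
  apply rotation_one_sided_bound; [assumption | assumption | lra | lra].
Qed.

Lemma solutions_agree (u v : R -> R * R) F G c s0 s1 : 0 <= c -> s0 < s1 ->
  (forall t, s0 < t < s1 -> deriv_along u F t /\ deriv_along v G t /\
     2 * ((fst (u t) - fst (v t)) * (fst (F (u t)) - fst (G (v t))) +
          (snd (u t) - snd (v t)) * (snd (F (u t)) - snd (G (v t)))) <= c * sqdist (u t) (v t)) ->
  right_cont (fun s => sqdist (u s) (v s)) s0 -> u s0 = v s0 ->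
  forall t, s0 < t < s1 -> u t = v t.
Proof.
  intros Hc Hs Hd Hr H0 t Ht. apply sqdist_le0.
  assert (Z : sqdist (u s0) (v s0) = 0) by (rewrite H0; unfold sqdist; ring).
  pose proof (sqdist_gronwall u v F G c 0 s0 s1 Hc (Rle_refl 0) Hs
                ltac:(intros x Hx; rewrite Rplus_0_r; apply Hd, Hx) Hr t Ht) as Hg.
  rewrite Z in Hg. lra.
Qed.

(** * Hybrid solutions following a flow *)

Lemma real_induction (Q : R -> Prop) tau :
  (forall s0, 0 <= s0 < tau -> (forall s, 0 <= s < s0 -> Q s) ->
     exists h, 0 < h /\ forall s, s0 <= s < s0 + h -> Q s) ->
  forall s, 0 <= s < tau -> Q s.
Proof.
  intros Hstep s Hs.
  set (E := fun x => 0 <= x <= tau /\ forall y, 0 <= y < x -> Q y).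
  assert (E0 : E 0) by (split; [lra | intros; lra]).
  destruct (completeness E) as [sg [Hub Hlub]];
    [exists tau; intros x [Hx _]; lra | exists 0; exact E0 |].
  assert (Hsg : 0 <= sg) by (apply Hub, E0).
  assert (Hbelow : forall y, 0 <= y < sg -> Q y).
  { intros y Hy. apply NNPP. intros HQ.
    assert (sg <= y); [| lra].
    apply Hlub. intros x [Hx Hxq]. destruct (Rle_dec x y) as [| Hn]; [assumption |].
    exfalso. apply HQ, Hxq. lra. }
  destruct (Rlt_le_dec sg tau) as [Hlt | Hge]; [| apply Hbelow; lra].
  exfalso. destruct (Hstep sg ltac:(lra) Hbelow) as [h [Hh Hq]].
  assert (E (Rmin (sg + h) tau)).
  { split; [split; [apply Rmin_glb; lra | apply Rmin_r] |].
    intros y Hy. pose proof (Rmin_l (sg + h) tau).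
    destruct (Rlt_le_dec y sg); [apply Hbelow | apply Hq]; lra. }
  apply Hub in H. assert (sg < Rmin (sg + h) tau) by (apply Rmin_glb_lt; lra). lra.
Qed.

Lemma first_crossing (g : R -> R) t0 A lv : t0 < A -> (forall s, t0 <= s <= A -> cont_at g s) ->
  g t0 < lv -> lv <= g A ->
  exists tau, t0 < tau <= A /\ g tau = lv /\ forall s, t0 <= s < tau -> g s < lv.
Proof.
  intros HA Hc H0 HAv.
  set (E := fun s => t0 <= s <= A /\ forall s', t0 <= s' <= s -> g s' < lv).
  assert (E0 : E t0) by (split; [lra | intros s' Hs'; replace s' with t0 by lra; assumption]).
  destruct (completeness E) as [tau [Hub Hlub]];
    [exists A; intros s [Hs _]; lra | exists t0; exact E0 |].
  assert (Ht0 : t0 <= tau) by (apply Hub, E0).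
  assert (HtA : tau <= A) by (apply Hlub; intros s [Hs _]; lra).
  assert (Hbelow : forall s, t0 <= s < tau -> g s < lv).
  { intros s Hs. apply NNPP. intros Hn.
    assert (tau <= s); [| lra]. apply Hlub. intros x [Hx Hxs].
    destruct (Rle_dec x s) as [| Hxs']; [assumption |]. exfalso. apply Hn, Hxs. lra. }
  (* if [g] were below [lv] at some point of [[t0, A)], the supremum could be pushed further *)
  assert (Hpush : forall x, t0 <= x < A -> (forall s, t0 <= s < x -> g s < lv) -> g x < lv -> x < tau).
  { intros x Hx Hb Hgx. destruct (Hc x ltac:(lra) (lv - g x) ltac:(lra)) as [d [Hd Hs]].
    set (s1 := Rmin (x + d / 2) A).
    pose proof (Rmin_l (x + d / 2) A) as Hs1l. pose proof (Rmin_r (x + d / 2) A) as Hs1r.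
    fold s1 in Hs1l, Hs1r.
    assert (E s1).
    { split; [split; [apply Rmin_glb | ]; lra |].
      intros s' Hs'. destruct (Rlt_le_dec s' x); [apply Hb; lra |].
      assert (Rabs (s' - x) < d) by (rewrite Rabs_right by lra; lra).
      specialize (Hs s' H). pose proof (Rle_abs (g s' - g x)). lra. }
    apply Hub in H. assert (x < s1) by (apply Rmin_glb_lt; lra). lra. }
  assert (Htau : t0 < tau) by (apply Hpush; [lra | intros; lra | assumption]).
  assert (Hge : lv <= g tau).
  { destruct (Rle_dec lv (g tau)) as [| Hn]; [assumption |].
    destruct (Req_dec tau A) as [-> | Hne]; [lra |].
    exfalso. pose proof (Hpush tau ltac:(lra) Hbelow ltac:(lra)). lra. }
  exists tau. split; [lra |]. split; [| assumption].
  destruct (Rle_dec (g tau) lv) as [| Hn]; [lra | exfalso]. apply Rnot_le_lt in Hn.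
  destruct (Hc tau ltac:(lra) (g tau - lv) ltac:(lra)) as [d [Hd Hs]].
  set (s1 := Rmax t0 (tau - d / 2)).
  assert (Hs1 : t0 <= s1 < tau) by (unfold s1; split; [apply Rmax_l | apply Rmax_lub_lt; lra]).
  pose proof (Rmax_r t0 (tau - d / 2)) as Hs1r. fold s1 in Hs1r.
  assert (Rabs (s1 - tau) < d) by (rewrite Rabs_left by lra; lra).
  specialize (Hs s1 H). specialize (Hbelow s1 Hs1). pose proof (Rle_abs (g tau - g s1)).
  rewrite Rabs_minus_sym in Hs. lra.
Qed.

Lemma left_lim_unique f g x l d : 0 < d -> left_lim f x l -> cont_at g x ->
  (forall s, x - d < s < x -> f s = g s) -> l = g x.
Proof.
  intros Hd Hf Hg He. apply Rminus_diag_uniq, Rabs_eq_0. apply Rle_antisym; [| apply Rabs_pos].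
  apply le_epsilon. intros e He0. rewrite Rplus_0_l.
  destruct (Hf (e / 2)) as [d1 [D1 P1]]; [lra |]. destruct (Hg (e / 2)) as [d2 [D2 P2]]; [lra |].
  set (m := Rmin d (Rmin d1 d2)).
  assert (Hm : 0 < m) by (repeat apply Rmin_pos; assumption).
  pose proof (Rmin_l d (Rmin d1 d2)). pose proof (Rmin_r d (Rmin d1 d2)).
  pose proof (Rmin_l d1 d2). pose proof (Rmin_r d1 d2). fold m in H, H0.
  specialize (P1 (x - m / 2) ltac:(lra)). specialize (P2 (x - m / 2) ltac:(rewrite Rabs_left; lra)).
  rewrite He in P1 by lra.
  replace (l - g x) with (- (g (x - m / 2) - l) + (g (x - m / 2) - g x)) by ring.
  eapply Rle_trans; [apply Rabs_triang |]. rewrite Rabs_Ropp. lra.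
Qed.

Lemma left_lim_of_cont_at f x : cont_at f x -> left_lim f x (f x).
Proof.
  intros H e He. destruct (H e He) as [d [Hd Hs]]. exists d. split; [assumption |].
  intros s Hs'. apply Hs. rewrite Rabs_left; lra.
Qed.

Lemma left_lim_shift f t0 s l : left_lim f (t0 + s) l -> left_lim (fun x => f (t0 + x)) s l.
Proof. intros H e He. destruct (H e He) as [d [Hd Hh]]. exists d. split; [assumption |]. intros x Hx. apply Hh. lra. Qed.

Lemma right_cont_shift f t0 s : right_cont f (t0 + s) -> right_cont (fun x => f (t0 + x)) s.
Proof.
  intros H e He. destruct (H e He) as [d [Hd Hh]]. exists d. split; [assumption |]. intros h Hh'.
  replace (t0 + (s + h)) with (t0 + s + h) by ring. auto.
Qed.

Lemma right_cont_reflect f t : right_cont f t <-> cont_at (fun s => f (t + Rabs (s - t))) t.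
Proof.
  split.
  - intros H e He. destruct (H e He) as [d [Hd Hh]]. exists d. split; [assumption |]. intros s Hs.
    cbv beta. rewrite Rminus_diag, Rabs_R0, Rplus_0_r.
    destruct (Req_dec s t) as [-> | Hne]; [rewrite Rminus_diag, Rabs_R0, Rplus_0_r, Rminus_diag, Rabs_R0; lra |].
    apply Hh. split; [apply Rabs_pos_lt; lra | assumption].
  - intros H e He. destruct (H e He) as [d [Hd Hh]]. exists d. split; [assumption |]. intros h Hh'.
    specialize (Hh (t + h)). cbv beta in Hh. replace (t + h - t) with h in Hh by ring.
    rewrite Rminus_diag, Rabs_R0, Rplus_0_r, Rabs_right in Hh by lra. apply Hh. lra.
Qed.

Lemma right_cont_sqdist (u v : R -> R * R) t :
  right_cont (fun s => fst (u s)) t -> right_cont (fun s => snd (u s)) t ->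
  right_cont (fun s => fst (v s)) t -> right_cont (fun s => snd (v s)) t ->
  right_cont (fun s => sqdist (u s) (v s)) t.
Proof.
  rewrite !right_cont_reflect. intros U1 U2 V1 V2.
  apply (cont_at_sqdist (fun s => u (t + Rabs (s - t))) (fun s => v (t + Rabs (s - t))));
    split; assumption.
Qed.

Lemma right_cont_of_deriv_along u F t : deriv_along u F t ->
  right_cont (fun s => fst (u s)) t /\ right_cont (fun s => snd (u s)) t.
Proof. intros H. destruct (cont2_at_deriv_along u F t H). split; apply right_cont_of_cont_at; assumption. Qed.

Lemma right_cont_near g t e : right_cont g t -> 0 < e ->
  exists h, 0 < h /\ forall x, 0 <= x < h -> Rabs (g (t + x) - g t) < e.
Proof.
  intros H He. destruct (H e He) as [h [Hh Hx]]. exists h. split; [assumption |]. intros x Hx'.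
  destruct (Req_dec x 0) as [-> | Hne]; [rewrite Rplus_0_r, Rminus_diag, Rabs_R0; assumption |].
  apply Hx. lra.
Qed.

Lemma hybrid_sol_right_cont a b k M eps w t : hybrid_sol a b k M eps w -> 0 <= t ->
  right_cont (fun s => fst (w s)) t /\ right_cont (fun s => snd (w s)) t.
Proof.
  intros [_ [_ [Hr _]]] Ht. destruct (Hr t Ht) as [R1 R2].
  split; eapply right_cont_of_right_deriv; eassumption.
Qed.

Lemma Rmin3_pos_le x y z : 0 < x -> 0 < y -> 0 < z ->
  let m := Rmin x (Rmin y z) in 0 < m /\ m <= x /\ m <= y /\ m <= z.
Proof.
  intros Hx Hy Hz m. pose proof (Rmin_l x (Rmin y z)). pose proof (Rmin_r x (Rmin y z)).
  pose proof (Rmin_l y z). pose proof (Rmin_r y z).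
  repeat split; try (unfold m; lra). unfold m. repeat apply Rmin_pos; assumption.
Qed.

Lemma in_box_near (v : R -> R * R) t r mg : 0 < mg ->
  right_cont (fun s => fst (v s)) t -> right_cont (fun s => snd (v s)) t -> in_box (r - mg) (v t) ->
  exists h, 0 < h /\ forall x, 0 <= x < h -> in_box r (v (t + x)).
Proof.
  intros Hmg R1 R2 [B1 B2].
  destruct (right_cont_near _ _ mg R1 Hmg) as [h1 [Hh1 N1]].
  destruct (right_cont_near _ _ mg R2 Hmg) as [h2 [Hh2 N2]].
  exists (Rmin h1 h2). split; [apply Rmin_pos; assumption |]. intros x Hx.
  pose proof (Rmin_l h1 h2). pose proof (Rmin_r h1 h2).
  specialize (N1 x ltac:(lra)). specialize (N2 x ltac:(lra)).
  split; [pose proof (Rabs_triang_inv (fst (v (t + x))) (fst (v t)))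
         | pose proof (Rabs_triang_inv (snd (v (t + x))) (snd (v t)))]; lra.
Qed.

Section FollowFlow.

Variables (a b k : R) (M : R * R -> R * R) (eps r mg dl : R) (w phi : R -> R * R) (t0 tau : R).
Hypotheses (a_le0 : a <= 0) (dl_ge0 : 0 <= dl) (mg_pos : 0 < mg) (M_lip : lipschitz_on_box M r dl)
  (w_sol : hybrid_sol a b k M eps w) (t0_ge0 : 0 <= t0) (phi_0 : phi 0 = w t0)
  (phi_flow : forall s, 0 <= s -> deriv_along phi (clamped_field a b M r) s)
  (phi_below : forall s, 0 < s < tau -> snd (phi s) < eps)
  (phi_box : forall s, 0 <= s < tau -> in_box (r - mg) (phi s))
  (w_leaves : exists h, 0 < h /\ forall s, 0 < s < h -> snd (w (t0 + s)) < eps).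

Let u x := w (t0 + x).

Lemma follow_start s0 : 0 <= s0 < tau -> (forall s, 0 <= s < s0 -> u s = phi s) -> u s0 = phi s0.
Proof.
  intros Hs0 Hprev. destruct w_sol as [Hle [Hflow [_ [_ Hleft]]]].
  destruct (Req_dec s0 0) as [-> | Hne]; [unfold u; rewrite Rplus_0_r; symmetry; exact phi_0 |].
  destruct (cont2_at_deriv_along phi _ s0 (phi_flow s0 ltac:(lra))) as [P1 P2].
  assert (Hagree : forall s, s0 - s0 < s < s0 -> u s = phi s) by (intros; apply Hprev; lra).
  destruct (Rle_lt_or_eq_dec _ _ (Hle (t0 + s0) ltac:(lra))) as [Hlt | Heq].
  - destruct (cont2_at_deriv_along u _ s0 (deriv_along_shift w _ t0 s0 (Hflow (t0 + s0) ltac:(lra) Hlt)))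
      as [U1 U2].
    apply injective_projections;
      [apply (left_lim_unique (fun s => fst (u s)) (fun s => fst (phi s)) s0 _ s0)
      | apply (left_lim_unique (fun s => snd (u s)) (fun s => snd (phi s)) s0 _ s0)];
      try lra; try (apply left_lim_of_cont_at; assumption); try assumption;
      intros s Hs; rewrite Hagree by lra; reflexivity.
  - exfalso. destruct (Hleft (t0 + s0) ltac:(lra) Heq) as [xi [_ L2]].
    assert (eps = snd (phi s0)).
    { apply (left_lim_unique (fun s => snd (u s)) (fun s => snd (phi s)) s0 eps s0); try lra; try assumption.
      - apply (left_lim_shift (fun y => snd (w y))), L2.
      - intros s Hs. rewrite Hagree by lra. reflexivity. }
    specialize (phi_below s0 ltac:(lra)). lra.
Qed.

Lemma follow_below s0 : 0 <= s0 < tau -> u s0 = phi s0 ->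
  exists h, 0 < h /\ forall x, 0 < x < h -> snd (u (s0 + x)) < eps.
Proof.
  intros Hs0 Hat. destruct (Req_dec s0 0) as [-> | Hne].
  - destruct w_leaves as [h [Hh Hs]]. exists h. split; [assumption |]. intros x Hx.
    unfold u. rewrite Rplus_0_l. apply Hs, Hx.
  - assert (Hlt : snd (u s0) < eps) by (rewrite Hat; apply phi_below; lra).
    destruct (hybrid_sol_right_cont a b k M eps w (t0 + s0) w_sol ltac:(lra)) as [_ R2].
    destruct (right_cont_near _ _ (eps - snd (u s0)) R2) as [h [Hh Hs]]; [lra |].
    exists h. split; [assumption |]. intros x Hx. specialize (Hs x ltac:(lra)).
    unfold u in *. rewrite Rplus_assoc in Hs.
    pose proof (Rle_abs (snd (w (t0 + (s0 + x))) - snd (w (t0 + s0)))). lra.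
Qed.

Lemma follow_step s0 : 0 <= s0 < tau -> u s0 = phi s0 ->
  exists h, 0 < h /\ forall s, s0 <= s < s0 + h -> u s = phi s.
Proof.
  intros Hs0 Hat. destruct w_sol as [Hle [Hflow _]].
  assert (Hr : 0 <= r) by (destruct (phi_box s0 Hs0) as [B _]; pose proof (Rabs_pos (fst (phi s0))); lra).
  destruct (hybrid_sol_right_cont a b k M eps w (t0 + s0) w_sol ltac:(lra)) as [R1 R2].
  destruct (follow_below s0 Hs0 Hat) as [h0 [Hh0 Hbelow]].
  destruct (in_box_near (fun x => w (t0 + x)) s0 r mg mg_pos
              (right_cont_shift _ t0 s0 R1) (right_cont_shift _ t0 s0 R2)
              ltac:(cbv beta; change (w (t0 + s0)) with (u s0); rewrite Hat; apply phi_box, Hs0))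
    as [h1 [Hh1 Hubox]].
  destruct (Rmin3_pos_le h0 h1 (tau - s0) Hh0 Hh1 ltac:(lra)) as [Hh [Hh_0 [Hh_1 Hh_tau]]].
  set (h := Rmin h0 (Rmin h1 (tau - s0))) in *.
  exists h. split; [assumption |]. intros s Hs.
  destruct (Rle_lt_or_eq_dec _ _ (proj1 Hs)) as [Hlt | <-]; [| assumption].
  apply (solutions_agree u phi (field a b M) (clamped_field a b M r) (4 * dl) s0 (s0 + h)); try lra.
  - intros t Ht. split; [| split].
    + apply (deriv_along_shift w). apply Hflow; [lra |].
      replace (t0 + t) with (t0 + (s0 + (t - s0))) by ring. apply Hbelow. lra.
    + apply phi_flow. lra.
    + rewrite <- (clamped_field_in_box a b M r (u t))
        by (replace t with (s0 + (t - s0)) by ring; apply Hubox; lra).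
      apply clamped_field_one_sided; assumption.
  - apply right_cont_sqdist;
      [apply (right_cont_shift (fun y => fst (w y))), R1 | apply (right_cont_shift (fun y => snd (w y))), R2
      | | ]; apply (right_cont_of_deriv_along phi (clamped_field a b M r)), phi_flow; lra.
  - exact Hat.
Qed.

Lemma hybrid_sol_follows_flow : forall s, 0 <= s < tau -> w (t0 + s) = phi s.
Proof.
  apply (real_induction (fun s => u s = phi s)). intros s0 Hs0 Hprev.
  apply follow_step; [assumption |]. apply follow_start; assumption.
Qed.

End FollowFlow.

(** * The nonlinearity near the origin *)

Lemma dist2_origin_le x y : dist2 (x, y) (0, 0) <= Rabs x + Rabs y.
Proof.
  unfold dist2. simpl. rewrite !Rminus_0_r.
  rewrite <- (sqrt_pow2 (Rabs x + Rabs y)) by (pose proof (Rabs_pos x); pose proof (Rabs_pos y); lra).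
  apply sqrt_le_1_alt. rewrite <- (pow2_abs x), <- (pow2_abs y) at 1.
  pose proof (Rabs_pos x). pose proof (Rabs_pos y). nra.
Qed.

Lemma abs_sub_le_of_deriv_bound (h h' : R -> R) a b B : (forall c, derivable_pt_lim h c (h' c)) ->
  (forall c, Rmin a b <= c <= Rmax a b -> Rabs (h' c) <= B) -> Rabs (h b - h a) <= B * Rabs (b - a).
Proof.
  intros Hd Hb. destruct (Rtotal_order a b) as [Hab | [-> | Hab]].
  - destruct (MVT_cor2 h h' a b Hab (fun c _ => Hd c)) as [c [-> Hc]]. rewrite Rabs_mult.
    apply Rmult_le_compat_r; [apply Rabs_pos |]. apply Hb. rewrite Rmin_left, Rmax_right; lra.
  - rewrite !Rminus_diag, Rabs_R0, Rmult_0_r. lra.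
  - destruct (MVT_cor2 h h' b a Hab (fun c _ => Hd c)) as [c [E Hc]].
    rewrite Rabs_minus_sym, E, Rabs_mult, (Rabs_minus_sym b a).
    apply Rmult_le_compat_r; [apply Rabs_pos |]. apply Hb. rewrite Rmin_right, Rmax_left; lra.
Qed.

Lemma C2_fun_small_lipschitz (g : R * R -> R) : C2_fun g ->
  derivable_pt_lim (fun u => g (u, 0)) 0 0 -> derivable_pt_lim (fun v => g (0, v)) 0 0 ->
  forall dl, 0 < dl -> exists rho, 0 < rho /\ forall p q, in_box rho p -> in_box rho q ->
    Rabs (g p - g q) <= dl * dist1 p q.
Proof.
  intros [gx [gy [_ [_ [_ [_ [[Px Py] [_ [_ [_ [Cx [Cy _]]]]]]]]]]]] H0x H0y dl Hdl.
  assert (Z1 : gx (0, 0) = 0) by (apply (uniqueness_limite (fun u => g (u, 0)) 0); auto).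
  assert (Z2 : gy (0, 0) = 0) by (apply (uniqueness_limite (fun v => g (0, v)) 0); auto).
  destruct (Cx (0, 0) dl Hdl) as [d1 [D1 Q1]]. destruct (Cy (0, 0) dl Hdl) as [d2 [D2 Q2]].
  set (rho := Rmin d1 d2 / 4).
  assert (Hm : 0 < Rmin d1 d2) by (apply Rmin_pos; assumption).
  assert (Hin : forall c, in_box rho c -> dist2 c (0, 0) < Rmin d1 d2).
  { intros [x y] [A B]. eapply Rle_lt_trans; [apply dist2_origin_le |]. unfold rho in *. simpl in *. lra. }
  assert (Hbox : forall x y x', in_box rho (x, y) -> in_box rho (x', y) ->
            forall c, Rmin x x' <= c <= Rmax x x' -> in_box rho (c, y)).
  { intros x y x' [A B] [A' _] c Hc. split; [| assumption]. simpl in *.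
    unfold Rmin, Rmax in Hc. destruct Rle_dec in Hc; unfold Rabs in *; repeat destruct Rcase_abs; lra. }
  exists rho. split; [unfold rho; lra |]. intros [x y] [x' y'] Hp Hq.
  replace (g (x, y) - g (x', y')) with ((g (x, y) - g (x', y)) + (g (x', y) - g (x', y'))) by ring.
  eapply Rle_trans; [apply Rabs_triang |]. unfold dist1. rewrite Rmult_plus_distr_l. simpl.
  assert (Hq' : in_box rho (x', y)) by (destruct Hp, Hq; split; assumption).
  apply Rplus_le_compat.
  - apply (abs_sub_le_of_deriv_bound (fun u => g (u, y)) (fun u => gx (u, y)) x' x dl); [intros; apply Px |].
    intros c Hc. specialize (Q1 (c, y) (Rlt_le_trans _ _ _ (Hin _ (Hbox x' y x Hq' Hp c Hc)) (Rmin_l _ _))).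
    rewrite Z1, Rminus_0_r in Q1. lra.
  - apply (abs_sub_le_of_deriv_bound (fun v => g (x', v)) (fun v => gy (x', v)) y' y dl); [intros; apply Py |].
    intros c Hc.
    assert (Hc' : in_box rho (x', c)).
    { destruct Hq as [A B], Hq' as [_ B']. split; [assumption |]. simpl in *.
      unfold Rmin, Rmax in Hc. destruct Rle_dec in Hc; unfold Rabs in *; repeat destruct Rcase_abs; lra. }
    specialize (Q2 (x', c) (Rlt_le_trans _ _ _ (Hin _ Hc') (Rmin_r _ _))).
    rewrite Z2, Rminus_0_r in Q2. lra.
Qed.

Lemma C2_map_small_lipschitz (M : R * R -> R * R) : C2_map M ->
  derivable_pt_lim (fun u => fst (M (u, 0))) 0 0 ->
  derivable_pt_lim (fun v => fst (M (0, v))) 0 0 ->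
  derivable_pt_lim (fun u => snd (M (u, 0))) 0 0 ->
  derivable_pt_lim (fun v => snd (M (0, v))) 0 0 ->
  forall dl, 0 < dl -> exists rho, 0 < rho /\ forall r, r <= rho -> lipschitz_on_box M r dl.
Proof.
  intros [C1 C2] H1 H2 H3 H4 dl Hdl.
  destruct (C2_fun_small_lipschitz _ C1 H1 H2 dl Hdl) as [r1 [R1 L1]].
  destruct (C2_fun_small_lipschitz _ C2 H3 H4 dl Hdl) as [r2 [R2 L2]].
  exists (Rmin r1 r2). split; [apply Rmin_pos; assumption |].
  intros r Hr p q Hp Hq. pose proof (Rmin_l r1 r2). pose proof (Rmin_r r1 r2).
  split; [apply L1 | apply L2]; apply (in_box_mono r); (lra || assumption).
Qed.

(** * The linear spiral *)

Definition lin_field a b (p : R * R) : R * R := (a * fst p - b * snd p, b * fst p + a * snd p).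

Definition lin_sol a b k (t : R) : R * R :=
  (sqrt (1 + k ^ 2) * exp (a * t) * cos (arccot (- k) + b * t),
   sqrt (1 + k ^ 2) * exp (a * t) * sin (arccot (- k) + b * t)).

Definition scale eps (p : R * R) : R * R := (eps * fst p, eps * snd p).

Lemma sqrt_1_plus_sq_pos x : 0 < sqrt (1 + x ^ 2).
Proof. apply sqrt_lt_R0. pose proof (pow2_ge_0 x). lra. Qed.

Lemma arccot_bounds x : 0 < arccot x < PI.
Proof. unfold arccot. pose proof (atan_bound x). lra. Qed.

Lemma lin_sol_0 a b k : lin_sol a b k 0 = (- k, 1).
Proof.
  unfold lin_sol, arccot. rewrite !Rmult_0_r, exp_0, Rplus_0_r, cos_shift, sin_shift, sin_atan, cos_atan.
  replace ((- k)²) with (k ^ 2) by (unfold Rsqr; ring).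
  pose proof (sqrt_1_plus_sq_pos k). f_equal; field; lra.
Qed.

Lemma lin_sol_deriv a b k eps t : deriv_along (fun s => scale eps (lin_sol a b k s)) (lin_field a b) t.
Proof. unfold scale, lin_sol, lin_field; split; simpl; apply is_derive_Reals; auto_derive; auto; ring. Qed.

Lemma lin_sol_bound a b k t : a < 0 -> 0 <= t ->
  Rabs (fst (lin_sol a b k t)) <= sqrt (1 + k ^ 2) /\ Rabs (snd (lin_sol a b k t)) <= sqrt (1 + k ^ 2).
Proof.
  intros Ha Ht. unfold lin_sol; cbn [fst snd]. pose proof (sqrt_1_plus_sq_pos k).
  assert (Hexp : exp (a * t) <= 1).
  { rewrite <- exp_0. destruct (Req_dec t 0) as [-> | Hne]; [rewrite Rmult_0_r; lra |].
    left. apply exp_increasing. nra. }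
  pose proof (exp_pos (a * t)). set (th := arccot (- k) + b * t).
  assert (Hc : Rabs (cos th) <= 1) by (apply Rabs_le; apply COS_bound).
  assert (Hs : Rabs (sin th) <= 1) by (apply Rabs_le; apply SIN_bound).
  assert (Hle : forall c, 0 <= c <= 1 -> sqrt (1 + k ^ 2) * exp (a * t) * c <= sqrt (1 + k ^ 2)).
  { intros c Hc'. assert (exp (a * t) * c <= 1) by nra. nra. }
  rewrite !Rabs_mult, (Rabs_pos_eq (sqrt (1 + k ^ 2))), (Rabs_pos_eq (exp (a * t))) by lra.
  pose proof (Rabs_pos (cos th)). pose proof (Rabs_pos (sin th)).
  split; apply Hle; lra.
Qed.

(* At [return_time] the angle of [lin_sol] is [arccot (- a / b)] again, one full turn later:
   there the height [e^(a t) sin] of the spiral is maximal on that turn. *)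
Definition return_time a b k := (2 * PI + arccot (- (a / b)) - arccot (- k)) / b.

Lemma return_time_pos a b k : 0 < b -> 0 < return_time a b k.
Proof.
  intros Hb. unfold return_time. pose proof (arccot_bounds (- (a / b))). pose proof (arccot_bounds (- k)).
  pose proof PI_RGT_0. apply Rdiv_lt_0_compat; lra.
Qed.

Lemma sqrt_exp_ln x : 0 < x -> sqrt x = exp (ln x / 2).
Proof.
  intros Hx. rewrite <- (sqrt_square (exp (ln x / 2))) by (left; apply exp_pos).
  f_equal. rewrite <- exp_plus. replace (ln x / 2 + ln x / 2) with (ln x) by field. rewrite exp_ln; auto.
Qed.

Lemma lin_sol_return_height a b k : a < 0 -> 0 < b ->
  a / b * (3 * PI / 2) - a / b * arccot (- k) + / 2 * ln (1 + k ^ 2) >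
  a / b * (- (PI / 2)) - a / b * arccot (- (a / b)) + / 2 * ln (1 + (a / b) ^ 2) ->
  1 < snd (lin_sol a b k (return_time a b k)).
Proof.
  intros Ha Hb Hc. unfold lin_sol, return_time; cbn [snd].
  replace (arccot (- k) + b * ((2 * PI + arccot (- (a / b)) - arccot (- k)) / b))
    with (arccot (- (a / b)) + 2 * INR 1 * PI) by (simpl; field; lra).
  rewrite sin_period.
  replace (sin (arccot (- (a / b)))) with (1 / sqrt (1 + (a / b) ^ 2))
    by (unfold arccot; rewrite sin_shift, cos_atan; f_equal; f_equal; unfold Rsqr; ring).
  assert (P1 : 0 < 1 + k ^ 2) by (pose proof (pow2_ge_0 k); lra).
  assert (P2 : 0 < 1 + (a / b) ^ 2) by (pose proof (pow2_ge_0 (a / b)); lra).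
  rewrite !sqrt_exp_ln by assumption.
  set (T := (2 * PI + arccot (- (a / b)) - arccot (- k)) / b).
  replace (exp (ln (1 + k ^ 2) / 2) * exp (a * T) * (1 / exp (ln (1 + (a / b) ^ 2) / 2)))
    with (exp (ln (1 + k ^ 2) / 2 + a * T - ln (1 + (a / b) ^ 2) / 2))
    by (unfold Rminus; rewrite !exp_plus, exp_Ropp; field; apply Rgt_not_eq, exp_pos).
  rewrite <- exp_0 at 1. apply exp_increasing.
  replace (a * T) with (a / b * (2 * PI + arccot (- (a / b)) - arccot (- k))) by (unfold T; field; lra).
  lra.
Qed.

Lemma lin_sol_cont a b k t : cont2_at (lin_sol a b k) t.
Proof.
  split; apply continuous_cont_at; unfold lin_sol; cbn [fst snd];
    apply (ex_derive_continuous (K := R_AbsRing) (V := R_NormedModule)); auto_derive; auto.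
Qed.

Lemma lin_sol_descent_near_0 a b k te : 0 < te -> a < b * k ->
  exists t1, 0 < t1 < te /\ forall t, 0 <= t <= t1 ->
    b * fst (lin_sol a b k t) + a * snd (lin_sol a b k t) <= - ((b * k - a) / 2).
Proof.
  intros Hte Hc. set (c0 := (b * k - a) / 2).
  destruct (lin_sol_cont a b k 0) as [C1 C2].
  destruct (cont_at_plus _ _ 0 (cont_at_mult _ _ 0 (cont_at_const b 0) C1)
              (cont_at_mult _ _ 0 (cont_at_const a 0) C2) c0) as [d [Hd Hs]]; [unfold c0; lra |].
  exists (Rmin (d / 2) (te / 2)). pose proof (Rmin_l (d / 2) (te / 2)). pose proof (Rmin_r (d / 2) (te / 2)).
  split; [split; [apply Rmin_pos |]; lra |]. intros t Ht.
  specialize (Hs t ltac:(rewrite Rminus_0_r, Rabs_pos_eq; lra)). rewrite lin_sol_0 in Hs. cbn [fst snd] in Hs.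
  pose proof (Rle_abs (b * fst (lin_sol a b k t) + a * snd (lin_sol a b k t) - (b * - k + a * 1))).
  unfold c0 in *. lra.
Qed.

(** * Periodic extensions *)

Definition period_count T t := IZR (up (t / T) - 1).
Definition period_phase T t := t - T * period_count T t.

Section Period.

Variable T : R.
Hypothesis T_pos : 0 < T.

Lemma period_count_spec t : period_count T t * T <= t < (period_count T t + 1) * T.
Proof.
  unfold period_count. rewrite minus_IZR. destruct (archimed (t / T)) as [A B].
  set (x := t / T) in *. assert (E : t = x * T) by (unfold x; field; lra).
  rewrite E. split; nra.
Qed.

Lemma period_count_unique t (n : Z) : IZR n * T <= t < (IZR n + 1) * T -> period_count T t = IZR n.
Proof.
  intros Hn. unfold period_count.
  assert (IZR n <= t / T < IZR n + 1).
  { split; [apply Rmult_le_reg_r with T | apply Rmult_lt_reg_r with T]; try assumption;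
      replace (t / T * T) with t by (field; lra); lra. }
  replace (up (t / T)) with (n + 1)%Z by (apply tech_up; rewrite plus_IZR; simpl; lra).
  f_equal. lia.
Qed.

Lemma period_phase_bounds t : 0 <= period_phase T t < T.
Proof. pose proof (period_count_spec t). unfold period_phase. nra. Qed.

Lemma period_phase_id t : 0 <= t < T -> period_phase T t = t.
Proof.
  intros Ht. unfold period_phase. rewrite (period_count_unique t 0) by (simpl; lra). ring.
Qed.

Lemma period_count_add_period t : period_count T (t + T) = period_count T t + 1.
Proof.
  unfold period_count at 2. rewrite <- plus_IZR. apply period_count_unique.
  rewrite plus_IZR. fold (period_count T t). pose proof (period_count_spec t). simpl. nra.
Qed.

Lemma period_phase_add_period t : period_phase T (t + T) = period_phase T t.
Proof. unfold period_phase. rewrite period_count_add_period. ring. Qed.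

Lemma period_phase_add_periods t n : period_phase T (t + INR n * T) = period_phase T t.
Proof.
  induction n as [| n IH]; [simpl; rewrite Rmult_0_l, Rplus_0_r; reflexivity |].
  rewrite S_INR. replace (t + (INR n + 1) * T) with (t + INR n * T + T) by ring.
  rewrite period_phase_add_period. exact IH.
Qed.

Lemma period_count_nat t : 0 <= t -> exists n : nat, period_count T t = INR n.
Proof.
  intros Ht. pose proof (period_count_spec t) as Hs. unfold period_count in *.
  set (z := (up (t / T) - 1)%Z) in *.
  assert (Hz : (0 <= z)%Z).
  { assert (-1 < IZR z) by nra. apply lt_IZR in H. lia. }
  exists (Z.to_nat z). rewrite INR_IZR_INZ, Z2Nat.id by assumption. reflexivity.
Qed.

Lemma period_count_local t s :
  Rabs (s - t) < Rmin (period_phase T t) (T - period_phase T t) -> period_count T s = period_count T t.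
Proof.
  intros Hs. unfold period_count at 2. apply period_count_unique. fold (period_count T t).
  pose proof (Rmin_l (period_phase T t) (T - period_phase T t)).
  pose proof (Rmin_r (period_phase T t) (T - period_phase T t)).
  unfold period_phase in *. unfold Rabs in Hs. destruct Rcase_abs in Hs; split; nra.
Qed.

Lemma period_count_right t h : 0 <= h < T - period_phase T t -> period_count T (t + h) = period_count T t.
Proof.
  intros Hh. unfold period_count at 2. apply period_count_unique. fold (period_count T t).
  pose proof (period_phase_bounds t). unfold period_phase in *. split; nra.
Qed.

Lemma period_count_left t s : period_phase T t = 0 -> t - T < s < t ->
  period_count T s = period_count T t - 1.
Proof.
  intros Hf Hs. unfold period_count at 2. rewrite <- minus_IZR. apply period_count_unique.
  rewrite minus_IZR. fold (period_count T t). unfold period_phase in Hf. simpl. split; nra.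
Qed.

Lemma exists_nat_periods_above x : exists n : nat, x <= INR n * T.
Proof.
  destruct (period_count_nat (Rabs x) (Rabs_pos x)) as [n Hn].
  exists (S n). rewrite S_INR, <- Hn. pose proof (period_count_spec (Rabs x)). pose proof (Rle_abs x). lra.
Qed.

End Period.

Lemma derivable_pt_lim_local (f g : R -> R) t l d : 0 < d -> (forall s, Rabs (s - t) < d -> f s = g s) ->
  derivable_pt_lim g t l -> derivable_pt_lim f t l.
Proof.
  intros Hd He Hg e He0. destruct (Hg e He0) as [del Hdel].
  assert (Hm : 0 < Rmin d del) by (apply Rmin_pos; [assumption | apply cond_pos]).
  exists (mkposreal _ Hm). intros h Hh0 Hh. simpl in Hh.
  rewrite !He; [apply Hdel; auto; eapply Rlt_le_trans; [exact Hh | apply Rmin_r] | |].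
  - rewrite Rminus_diag, Rabs_R0. assumption.
  - replace (t + h - t) with h by ring. eapply Rlt_le_trans; [exact Hh | apply Rmin_l].
Qed.

Lemma right_deriv_of_derivable f t l : derivable_pt_lim f t l -> right_deriv f t l.
Proof.
  intros H e He. destruct (H e He) as [del Hdel]. exists del. split; [apply cond_pos |].
  intros h Hh. apply Hdel; [lra | rewrite Rabs_right; lra].
Qed.

Lemma right_deriv_local (f g : R -> R) t l d : 0 < d -> (forall h, 0 <= h < d -> f (t + h) = g (t + h)) ->
  right_deriv g t l -> right_deriv f t l.
Proof.
  intros Hd He Hg e He0. destruct (Hg e He0) as [del [Hdel Hh]].
  exists (Rmin d del). split; [apply Rmin_pos; assumption |]. intros h Hh'.
  pose proof (Rmin_l d del). pose proof (Rmin_r d del).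
  assert (E0 : f t = g t) by (pose proof (He 0 ltac:(lra)) as E; rewrite Rplus_0_r in E; exact E).
  rewrite He, E0 by lra. apply Hh. lra.
Qed.

Lemma derivable_pt_lim_shift f c s l : derivable_pt_lim f (s - c) l -> derivable_pt_lim (fun x => f (x - c)) s l.
Proof.
  intros H. rewrite <- (Rmult_1_r l).
  apply (derivable_pt_lim_comp (fun x => x - c) f s 1 l); [| exact H].
  apply is_derive_Reals. auto_derive; [exact I | ring].
Qed.

Definition periodic_extension (phi : R -> R * R) T t := phi (period_phase T t).

Section PeriodicExtension.

Variables (a b k : R) (M : R * R -> R * R) (eps r : R) (phi : R -> R * R) (T : R).
Hypotheses (T_pos : 0 < T) (phi_0 : phi 0 = (- k * eps, eps))
  (phi_flow : forall t, 0 <= t -> deriv_along phi (clamped_field a b M r) t)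
  (phi_box : forall t, 0 <= t < T -> in_box r (phi t))
  (phi_T : snd (phi T) = eps) (phi_below : forall t, 0 < t < T -> snd (phi t) < eps).

Let z := periodic_extension phi T.

Lemma extension_on_line t : snd (z t) = eps -> period_phase T t = 0.
Proof.
  intros Ht. pose proof (period_phase_bounds T T_pos t).
  destruct (Req_dec (period_phase T t) 0) as [| Hne]; [assumption |].
  specialize (phi_below (period_phase T t) ltac:(lra)). unfold z, periodic_extension in Ht. lra.
Qed.

Lemma extension_below t : snd (z t) <= eps.
Proof.
  unfold z, periodic_extension. pose proof (period_phase_bounds T T_pos t).
  destruct (Req_dec (period_phase T t) 0) as [-> | Hne]; [rewrite phi_0; simpl; lra |].
  left. apply phi_below. lra.
Qed.

Lemma extension_flow t : snd (z t) < eps -> deriv_along z (field a b M) t.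
Proof.
  intros Hlt. set (u := period_phase T t).
  assert (Hu : 0 < u < T).
  { pose proof (period_phase_bounds T T_pos t). destruct (Req_dec u 0) as [Z | NZ]; [| unfold u in *; lra].
    unfold z, periodic_extension in Hlt. fold u in Hlt. rewrite Z, phi_0 in Hlt. simpl in Hlt. lra. }
  assert (Hd : 0 < Rmin u (T - u)) by (apply Rmin_pos; lra).
  assert (Hloc : forall s, Rabs (s - t) < Rmin u (T - u) -> z s = phi (s - T * period_count T t)).
  { intros s Hs. unfold z, periodic_extension, period_phase. rewrite (period_count_local T T_pos t s Hs). reflexivity. }
  assert (Et : t - T * period_count T t = u) by reflexivity.
  destruct (deriv_along_field_of_clamped a b M r phi u (phi_box u ltac:(lra)) (phi_flow u ltac:(lra))) as [D1 D2]. rewrite <- Et in D1, D2. unfold deriv_along.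
  replace (z t) with (phi (t - T * period_count T t)) by reflexivity.
  split; [apply (derivable_pt_lim_local _ (fun x => fst (phi (x - T * period_count T t))) t _ _ Hd)
         | apply (derivable_pt_lim_local _ (fun x => snd (phi (x - T * period_count T t))) t _ _ Hd)];
    try (intros s Hs; rewrite Hloc by assumption; reflexivity);
    [apply (derivable_pt_lim_shift (fun y => fst (phi y))) | apply (derivable_pt_lim_shift (fun y => snd (phi y)))];
    assumption.
Qed.

Lemma extension_right_deriv t :
  right_deriv (fun s => fst (z s)) t (fst (field a b M (z t))) /\
  right_deriv (fun s => snd (z s)) t (snd (field a b M (z t))).
Proof.
  set (u := period_phase T t). pose proof (period_phase_bounds T T_pos t) as Hu. fold u in Hu.
  assert (Hd : 0 < T - u) by lra.
  assert (Hloc : forall h, 0 <= h < T - u -> z (t + h) = phi (t + h - T * period_count T t)).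
  { intros h Hh. unfold z, periodic_extension, period_phase. rewrite (period_count_right T T_pos t h Hh). reflexivity. }
  assert (Et : t - T * period_count T t = u) by reflexivity.
  destruct (deriv_along_field_of_clamped a b M r phi u (phi_box u ltac:(lra)) (phi_flow u ltac:(lra))) as [D1 D2]. rewrite <- Et in D1, D2.
  replace (z t) with (phi (t - T * period_count T t)) by reflexivity.
  split; [apply (right_deriv_local _ (fun x => fst (phi (x - T * period_count T t))) t _ _ Hd)
         | apply (right_deriv_local _ (fun x => snd (phi (x - T * period_count T t))) t _ _ Hd)];
    try (intros h Hh; rewrite Hloc by assumption; reflexivity);
    apply right_deriv_of_derivable;
    [apply (derivable_pt_lim_shift (fun y => fst (phi y))) | apply (derivable_pt_lim_shift (fun y => snd (phi y)))];
    assumption.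
Qed.

Lemma extension_left_lim t : snd (z t) = eps ->
  exists xi, left_lim (fun s => fst (z s)) t xi /\ left_lim (fun s => snd (z s)) t eps.
Proof.
  intros Heq. pose proof (extension_on_line t Heq) as Hf. exists (fst (phi T)).
  assert (Hloc : forall s, t - T < s < t -> z s = phi (s - T * (period_count T t - 1))).
  { intros s Hs. unfold z, periodic_extension, period_phase. rewrite (period_count_left T T_pos t s Hf Hs). reflexivity. }
  assert (Et : t - T * (period_count T t - 1) = T) by (unfold period_phase in Hf; lra).
  destruct (cont2_at_deriv_along phi _ T (phi_flow T ltac:(lra))) as [C1 C2].
  rewrite <- phi_T.
  split; intros e He; [destruct (C1 e He) as [d [Hd Hs]] | destruct (C2 e He) as [d [Hd Hs]]];
    exists (Rmin d T); (split; [apply Rmin_pos; lra |]); intros s Hs';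
    pose proof (Rmin_l d T); pose proof (Rmin_r d T);
    rewrite (Hloc s ltac:(lra)); apply Hs; rewrite Rabs_left; lra.
Qed.

Lemma periodic_extension_cycle :
  hybrid_sol a b k M eps z /\ periodic_sol z T /\ one_impact_per_period eps z T.
Proof.
  split; [| split].
  - split; [intros; apply extension_below |]. split; [intros t _; apply extension_flow |].
    split; [intros t _; apply extension_right_deriv |].
    split; [| intros t _; apply extension_left_lim].
    intros t _ Heq. unfold z, periodic_extension. rewrite (extension_on_line t Heq), phi_0. reflexivity.
  - split; [assumption |]. intros t _. unfold z, periodic_extension. rewrite period_phase_add_period by assumption.
    reflexivity.
  - exists 0. split; [lra |]. unfold z, periodic_extension.
    rewrite period_phase_id, phi_0 by lra. split; [reflexivity |].
    intros s Hs Heq. rewrite period_phase_id in Heq by lra.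
    destruct (Req_dec s 0) as [| Hne]; [assumption |]. specialize (phi_below s ltac:(lra)). lra.
Qed.

End PeriodicExtension.

(** * Finite-time stability *)

Lemma clamped_flows_sqdist a b M r dl (u v : R -> R * R) t : a <= 0 -> 0 <= r -> 0 <= dl ->
  lipschitz_on_box M r dl ->
  (forall s, 0 <= s -> deriv_along u (clamped_field a b M r) s) ->
  (forall s, 0 <= s -> deriv_along v (clamped_field a b M r) s) ->
  0 <= t -> sqdist (u t) (v t) <= exp (4 * dl * t) * sqdist (u 0) (v 0).
Proof.
  intros Ha Hr Hdl HL Hu Hv Ht.
  destruct (Rle_lt_or_eq_dec _ _ Ht) as [Ht0 | <-]; [| rewrite Rmult_0_r, exp_0; lra].
  pose proof (sqdist_gronwall u v (clamped_field a b M r) (clamped_field a b M r) (4 * dl) 0 0 (t + 1)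
    ltac:(lra) (Rle_refl 0) ltac:(lra)) as Hg.
  assert (H := Hg ltac:(intros s Hs; rewrite Rplus_0_r; split; [apply Hu; lra | split; [apply Hv; lra |]];
                    apply clamped_field_one_sided; assumption)).
  assert (Hr0 : right_cont (fun s => sqdist (u s) (v s)) 0)
    by (apply right_cont_of_cont_at, cont_at_sqdist;
        [apply (cont2_at_deriv_along u (clamped_field a b M r)), Hu
        | apply (cont2_at_deriv_along v (clamped_field a b M r)), Hv]; lra).
  specialize (H Hr0 t ltac:(lra)). rewrite !Rplus_0_r, Rminus_0_r in H. exact H.
Qed.

Section AfterReset.

Variables (a b k : R) (M : R * R -> R * R) (eps r dl : R) (phi : R -> R * R) (T : R).
Hypotheses (a_le0 : a <= 0) (dl_ge0 : 0 <= dl) (eps_pos : 0 < eps) (M_lip : lipschitz_on_box M r dl)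
  (T_pos : 0 < T) (phi_0 : phi 0 = (- k * eps, eps))
  (phi_flow : forall t, 0 <= t -> deriv_along phi (clamped_field a b M r) t)
  (phi_box : forall t, 0 <= t < T -> in_box (r - eps) (phi t))
  (phi_T : snd (phi T) = eps) (phi_below : forall t, 0 < t < T -> snd (phi t) < eps)
  (reset_down : snd (field a b M (- k * eps, eps)) < 0).

Let reset := (- k * eps, eps).

Lemma leaves_line_after_reset w t0 : hybrid_sol a b k M eps w -> 0 <= t0 -> w t0 = reset ->
  exists h, 0 < h /\ forall s, 0 < s < h -> snd (w (t0 + s)) < eps.
Proof.
  intros [_ [_ [Hw3 _]]] Ht0 Hwt0. destruct (Hw3 t0 Ht0) as [_ R2]. rewrite Hwt0 in R2.
  set (l := snd (field a b M reset)) in *.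
  destruct (R2 (- l / 2)) as [d [Hd Hh]]; [unfold l, reset; lra |].
  exists d. split; [assumption |]. intros s Hs.
  specialize (Hh s Hs). rewrite Hwt0 in Hh. simpl in Hh.
  assert ((snd (w (t0 + s)) - eps) / s < l / 2)
    by (pose proof (Rle_abs ((snd (w (t0 + s)) - eps) / s - l)); unfold l, reset in *; lra).
  assert (snd (w (t0 + s)) - eps < 0); [| lra].
  apply Rmult_lt_reg_r with (/ s); [apply Rinv_0_lt_compat; lra |].
  rewrite Rmult_0_l. unfold Rdiv in H. unfold l, reset in *. lra.
Qed.

Lemma one_period_after_reset w t0 : hybrid_sol a b k M eps w -> 0 <= t0 -> w t0 = reset ->
  (forall u, 0 <= u < T -> w (t0 + u) = phi u) /\ w (t0 + T) = reset.
Proof.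
  intros Hw Ht0 Hwt0.
  assert (Hf := hybrid_sol_follows_flow a b k M eps r eps dl w phi t0 T a_le0 dl_ge0 eps_pos M_lip Hw Ht0
    ltac:(rewrite phi_0; symmetry; exact Hwt0) phi_flow phi_below phi_box (leaves_line_after_reset w t0 Hw Ht0 Hwt0)).
  split; [assumption |]. destruct Hw as [Hle [Hflow [_ [Hreset _]]]].
  destruct (Rle_lt_or_eq_dec _ _ (Hle (t0 + T) ltac:(lra))) as [Hlt | Heq].
  - exfalso. destruct (Hflow (t0 + T) ltac:(lra) Hlt) as [_ D2].
    destruct (cont2_at_deriv_along phi _ T (phi_flow T ltac:(lra))) as [_ C2].
    assert (snd (w (t0 + T)) = snd (phi T)).
    { apply (left_lim_unique (fun x => snd (w (t0 + x))) (fun x => snd (phi x)) T _ T); try assumption.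
      - apply left_lim_of_cont_at. exact (cont_at_derivable _ _ _ (proj2 (deriv_along_shift w (field a b M) t0 T
          (conj (proj1 (Hflow (t0 + T) ltac:(lra) Hlt)) D2)))).
      - intros x Hx. rewrite Hf by lra. reflexivity. }
    lra.
  - apply injective_projections; [apply Hreset; lra | exact Heq].
Qed.

Lemma hybrid_sol_after_reset w t1 : hybrid_sol a b k M eps w -> 0 <= t1 -> w t1 = reset ->
  forall s, 0 <= s -> w (t1 + s) = periodic_extension phi T s.
Proof.
  intros Hw Ht1 Hw1.
  assert (Hn : forall n : nat, w (t1 + INR n * T) = reset /\
                 forall u, 0 <= u < T -> w (t1 + INR n * T + u) = phi u).
  { induction n as [| n [IH _]].
    - simpl. rewrite Rmult_0_l, Rplus_0_r. split; [assumption |]. apply one_period_after_reset; assumption.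
    - rewrite S_INR. replace (t1 + (INR n + 1) * T) with (t1 + INR n * T + T) by ring.
      pose proof (pos_INR n).
      destruct (one_period_after_reset w (t1 + INR n * T) Hw ltac:(nra) IH) as [_ B].
      split; [assumption |]. apply one_period_after_reset; [assumption | nra | assumption]. }
  intros s Hs. destruct (period_count_nat T T_pos s Hs) as [n Hfn].
  destruct (Hn n) as [_ B]. pose proof (period_phase_bounds T T_pos s).
  unfold periodic_extension. rewrite <- B by assumption. f_equal. unfold period_phase. rewrite Hfn. ring.
Qed.

Lemma coincides_after_reset w t1 : hybrid_sol a b k M eps w -> 0 <= t1 -> w t1 = reset ->
  exists t1 c, 0 <= t1 /\ 0 <= c /\ forall t, t1 <= t -> w t = periodic_extension phi T (t + c).
Proof.
  intros Hw Ht1 Hwt1. destruct (exists_nat_periods_above T T_pos t1) as [N HN].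
  exists t1, (INR N * T - t1). split; [assumption | split; [lra |]].
  intros t Ht. replace t with (t1 + (t - t1)) at 1 by ring.
  rewrite (hybrid_sol_after_reset w t1 Hw Ht1 Hwt1 (t - t1)) by lra. unfold periodic_extension.
  replace (t + (INR N * T - t1)) with ((t - t1) + INR N * T) by ring.
  rewrite period_phase_add_periods by assumption. reflexivity.
Qed.

End AfterReset.

Section Stability.

Variables (a b k : R) (M : R * R -> R * R) (eps r dl : R) (phi : R -> R * R) (T te gam : R).
Hypotheses (a_le0 : a <= 0) (dl_pos : 0 < dl) (dl_le1 : dl <= 1) (eps_pos : 0 < eps) (gam_pos : 0 < gam)
  (M_lip : lipschitz_on_box M r dl) (T_pos : 0 < T) (T_le : T <= te) (phi_0 : phi 0 = (- k * eps, eps))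
  (phi_flow : forall t, 0 <= t -> deriv_along phi (clamped_field a b M r) t)
  (phi_box : forall t, 0 <= t <= te -> in_box (r - eps - eps * gam) (phi t))
  (phi_te : eps + eps * gam < snd (phi te))
  (phi_T : snd (phi T) = eps) (phi_below : forall t, 0 < t < T -> snd (phi t) < eps)
  (reset_down : snd (field a b M (- k * eps, eps)) < 0).

Let r_ge_eps : eps <= r.
Proof.
  destruct (phi_box 0 ltac:(lra)) as [_ B]. rewrite phi_0 in B. simpl in B.
  rewrite Rabs_pos_eq in B by lra. nra.
Qed.

Let phi_box_period t : 0 <= t < T -> in_box (r - eps) (phi t).
Proof. intros Ht. apply (in_box_mono (r - eps - eps * gam)); [nra | apply phi_box; lra]. Qed.

(* Squared distances between clamped flows grow at most by [exp (4 t)] (as [dl <= 1]), so this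
   radius keeps them [eps * gam]-close up to time [te + 1]. *)
Definition stability_radius := eps * gam / exp (2 * (te + 1)).

Lemma stability_radius_pos : 0 < stability_radius.
Proof. apply Rdiv_lt_0_compat; [nra | apply exp_pos]. Qed.

Lemma flow_near_cycle_stays_close psi p s' : 0 <= s' -> psi 0 = p -> dist2 p (phi s') < stability_radius ->
  (forall t, 0 <= t -> deriv_along psi (clamped_field a b M r) t) ->
  forall x, 0 <= x <= te + 1 - s' ->
    Rabs (fst (psi x) - fst (phi (s' + x))) <= eps * gam /\ Rabs (snd (psi x) - snd (phi (s' + x))) <= eps * gam.
Proof.
  intros Hs' Hps0 Hdist Hpsi x Hx. apply sqdist_le_components; [nra |].
  eapply Rle_trans; [apply (clamped_flows_sqdist a b M r dl psi (fun y => phi (s' + y))); try lra; auto |].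
  - intros y Hy. apply (deriv_along_shift phi), phi_flow. lra.
  - rewrite Rplus_0_r, Hps0, sqdist_dist2.
    assert (Hd0 : 0 <= dist2 p (phi s')) by apply sqrt_pos.
    assert (Hexp : exp (4 * dl * x) <= exp (4 * (te + 1))) by (apply exp_le_compat; nra).
    replace ((eps * gam) ^ 2) with (exp (4 * (te + 1)) * stability_radius ^ 2).
    + apply Rmult_le_compat; [left; apply exp_pos | apply pow2_ge_0 | assumption |].
      apply pow_incr. lra.
    + unfold stability_radius. replace (4 * (te + 1)) with (2 * (te + 1) + 2 * (te + 1)) by ring.
      rewrite exp_plus. field. apply Rgt_not_eq, exp_pos.
Qed.

Lemma near_cycle_reaches_reset p w s : 0 <= s < T -> snd p < eps -> dist2 p (phi s) < stability_radius ->
  hybrid_sol a b k M eps w -> w 0 = p -> exists t1, 0 <= t1 /\ w t1 = (- k * eps, eps).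
Proof.
  intros Hs Hp Hdist Hw Hw0.
  destruct (clamped_flow_exists a b M r dl ltac:(lra) ltac:(lra) M_lip p) as [psi [Hps0 Hpsi]].
  pose proof (flow_near_cycle_stays_close psi p s (proj1 Hs) Hps0 Hdist Hpsi) as Hclose.
  assert (Hhigh : eps < snd (psi (te - s))).
  { destruct (Hclose (te - s) ltac:(lra)) as [_ B]. replace (s + (te - s)) with te in B by ring.
    pose proof (Rle_abs (snd (phi te) - snd (psi (te - s)))). rewrite Rabs_minus_sym in B. lra. }
  destruct (first_crossing (fun x => snd (psi x)) 0 (te - s) eps) as [tau [Htau [Hpt Hpb]]];
    [lra | intros x Hx; apply (cont2_at_deriv_along psi (clamped_field a b M r)), Hpsi; lra
    | rewrite Hps0; assumption | lra |].
  assert (Hleave : exists h, 0 < h /\ forall x, 0 < x < h -> snd (w (0 + x)) < eps).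
  { destruct (hybrid_sol_right_cont a b k M eps w 0 Hw (Rle_refl 0)) as [_ R2].
    destruct (right_cont_near _ _ (eps - snd p) R2) as [d [Hd Hh]]; [lra |].
    exists d. split; [assumption |]. intros x Hx. specialize (Hh x ltac:(lra)). rewrite Hw0 in Hh.
    pose proof (Rle_abs (snd (w (0 + x)) - snd p)). lra. }
  assert (Hfollow : forall x, 0 <= x < tau -> w x = psi x).
  { intros x Hx. replace x with (0 + x) at 1 by ring.
    apply (hybrid_sol_follows_flow a b k M eps r eps dl w psi 0 tau); try assumption; try lra.
    - rewrite Hps0, Hw0. reflexivity.
    - intros y Hy. apply Hpb. lra.
    - intros y Hy. destruct (Hclose y ltac:(lra)) as [A B]. destruct (phi_box (s + y) ltac:(lra)) as [C D].
      split; [pose proof (Rabs_triang_inv (fst (psi y)) (fst (phi (s + y))))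
             | pose proof (Rabs_triang_inv (snd (psi y)) (snd (phi (s + y))))]; lra. }
  exists tau. split; [lra |]. destruct Hw as [Hle [Hflow [_ [Hreset _]]]].
  assert (Hwt : snd (w tau) = eps).
  { destruct (Rle_lt_or_eq_dec _ _ (Hle tau ltac:(lra))) as [Hlt | Heq]; [exfalso | assumption].
    destruct (Hflow tau ltac:(lra) Hlt) as [_ D2].
    assert (snd (w tau) = snd (psi tau)); [| lra].
    apply (left_lim_unique (fun x => snd (w x)) (fun x => snd (psi x)) tau _ tau); try lra.
    - apply left_lim_of_cont_at. eapply cont_at_derivable. exact D2.
    - apply (cont2_at_deriv_along psi (clamped_field a b M r)), Hpsi. lra.
    - intros x Hx. rewrite Hfollow by lra. reflexivity. }
  apply injective_projections; [apply Hreset; lra | exact Hwt].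
Qed.

Lemma periodic_extension_ft_stable : ft_stable a b k M eps (periodic_extension phi T).
Proof.
  exists stability_radius. split; [apply stability_radius_pos |].
  intros p w [s [Hs Hdist]] Hw Hst.
  destruct Hst as [[Hpy Hw0] | [Hpy Hw0]].
  - destruct (near_cycle_reaches_reset p w (period_phase T s) (period_phase_bounds T T_pos s) Hpy Hdist Hw Hw0)
      as [t1 [Ht1 Hwt1]].
    apply (coincides_after_reset a b k M eps r dl phi T) with (t1 := t1); try assumption; lra.
  - apply (coincides_after_reset a b k M eps r dl phi T) with (w := w) (t1 := 0); try assumption; lra.
Qed.

End Stability.

(** * The cycle for small eps *)

(* The rotation drops out, [a <= 0] only helps, and [2 X P <= X^2 + P^2]. *)
Lemma rotation_forced_bound a b X Y P Q D : a <= 0 -> P ^ 2 + Q ^ 2 <= D ->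
  2 * (X * (a * X - b * Y + P) + Y * (b * X + a * Y + Q)) <= 1 * ((X ^ 2 + Y ^ 2) + D).
Proof.
  intros Ha HD. pose proof (pow2_ge_0 (X - P)). pose proof (pow2_ge_0 (Y - Q)).
  pose proof (pow2_ge_0 X). pose proof (pow2_ge_0 Y). nra.
Qed.

Section CycleForEps.

Variables (a b k : R) (M : R * R -> R * R) (t1 te m c0 eta dl eps : R).
Let R0 := sqrt (1 + k ^ 2).
Let r := eps * (R0 + 2).
Hypotheses (a_neg : a < 0) (b_pos : 0 < b) (k_pos : 0 < k) (M_0 : M (0, 0) = (0, 0))
  (t1_pos : 0 < t1) (t1_lt : t1 < te)
  (lin_descent : forall t, 0 <= t <= t1 -> b * fst (lin_sol a b k t) + a * snd (lin_sol a b k t) <= - c0)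
  (te_height : snd (lin_sol a b k te) = 1 + m) (m_pos : 0 < m) (c0_pos : 0 < c0) (c0_reset : a - b * k <= - c0)
  (eta_pos : 0 < eta) (eta_half : eta <= 1 / 2) (eta_m : eta <= m / 4) (eta_c0 : (b - a) * eta <= c0 / 4)
  (dl_pos : 0 < dl) (dl_le1 : dl <= 1) (dl_descent : 2 * dl * (R0 + 2) <= c0 / 4)
  (dl_track : 8 * dl ^ 2 * (R0 + 2) ^ 2 * exp (te + 1) <= eta ^ 2) (dl_reset : dl * (k + 1) < c0)
  (eps_pos : 0 < eps) (M_lip : lipschitz_on_box M r dl).

Let R0_pos : 0 < R0.
Proof. apply sqrt_1_plus_sq_pos. Qed.

Let r_ge0 : 0 <= r.
Proof. unfold r. nra. Qed.

Section Tracking.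

Variable phi : R -> R * R.
Hypotheses (phi_0 : phi 0 = (- k * eps, eps))
  (phi_flow : forall t, 0 <= t -> deriv_along phi (clamped_field a b M r) t).

Lemma clamped_flow_tracks_lin_sol t : 0 <= t < te + 1 ->
  Rabs (fst (phi t) - eps * fst (lin_sol a b k t)) <= eps * eta /\
  Rabs (snd (phi t) - eps * snd (lin_sol a b k t)) <= eps * eta.
Proof.
  intros Ht. set (v := fun s => scale eps (lin_sol a b k s)).
  apply (sqdist_le_components (phi t) (v t)); [nra |].
  assert (E0 : sqdist (phi 0) (v 0) = 0)
    by (rewrite phi_0; unfold v, scale; rewrite lin_sol_0; unfold sqdist; simpl; ring).
  (* the clamped perturbation is at most [2 dl r], a forcing of squared size at most [D] *)
  set (D := 8 * dl ^ 2 * r ^ 2).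
  assert (HD : 0 <= D) by (unfold D; pose proof (pow2_ge_0 dl); pose proof (pow2_ge_0 r); nra).
  destruct (Rle_lt_or_eq_dec _ _ (proj1 Ht)) as [Ht0 | <-]; [| rewrite E0; pose proof (pow2_ge_0 (eps * eta)); lra].
  assert (Hg := sqdist_gronwall phi v (clamped_field a b M r) (lin_field a b) 1 D 0 (te + 1)
                  ltac:(lra) HD ltac:(lra)).
  assert (Hd : forall s, 0 < s < te + 1 -> deriv_along phi (clamped_field a b M r) s /\ deriv_along v (lin_field a b) s /\
     2 * ((fst (phi s) - fst (v s)) * (fst (clamped_field a b M r (phi s)) - fst (lin_field a b (v s))) +
          (snd (phi s) - snd (v s)) * (snd (clamped_field a b M r (phi s)) - snd (lin_field a b (v s))))
       <= 1 * (sqdist (phi s) (v s) + D)).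
  { intros s Hs. split; [apply phi_flow; lra | split; [apply lin_sol_deriv |]].
    destruct (clamped_perturbation_bound M r dl r_ge0 (Rlt_le _ _ dl_pos) M_lip M_0 (phi s)) as [P Q].
    unfold clamped_field, lin_field, sqdist; cbn [fst snd].
    set (X := fst (phi s) - fst (v s)). set (Y := snd (phi s) - snd (v s)).
    set (Pm := fst (M (clamp2 r (phi s)))) in *. set (Qm := snd (M (clamp2 r (phi s)))) in *.
    replace (a * fst (phi s) - b * snd (phi s) + Pm - (a * fst (v s) - b * snd (v s))) with (a * X - b * Y + Pm)
      by (unfold X, Y; ring).
    replace (b * fst (phi s) + a * snd (phi s) + Qm - (b * fst (v s) + a * snd (v s))) with (b * X + a * Y + Qm)
      by (unfold X, Y; ring).
    apply rotation_forced_bound; [lra |].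
    rewrite <- (pow2_abs Pm), <- (pow2_abs Qm). pose proof (Rabs_pos Pm). pose proof (Rabs_pos Qm).
    unfold D. assert (Rabs Pm ^ 2 <= (2 * dl * r) ^ 2) by (apply pow_incr; lra).
    assert (Rabs Qm ^ 2 <= (2 * dl * r) ^ 2) by (apply pow_incr; lra). nra. }
  assert (Hrc : right_cont (fun s => sqdist (phi s) (v s)) 0).
  { apply right_cont_of_cont_at, cont_at_sqdist;
      [apply (cont2_at_deriv_along phi (clamped_field a b M r)), phi_flow; lra
      | apply (cont2_at_deriv_along v (lin_field a b)), lin_sol_deriv]. }
  specialize (Hg Hd Hrc t ltac:(lra)). rewrite E0, Rplus_0_l, Rmult_1_l, Rminus_0_r in Hg.
  assert (D * exp t <= (eps * eta) ^ 2); [| pose proof (exp_pos t); nra].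
  apply Rle_trans with (D * exp (te + 1)); [apply Rmult_le_compat_l; [assumption | apply exp_le_compat; lra] |].
  unfold D, r. replace (8 * dl ^ 2 * (eps * (R0 + 2)) ^ 2 * exp (te + 1))
    with (eps ^ 2 * (8 * dl ^ 2 * (R0 + 2) ^ 2 * exp (te + 1))) by ring.
  rewrite Rpow_mult_distr. apply Rmult_le_compat_l; [apply pow2_ge_0 | assumption].
Qed.

Lemma clamped_flow_descends t : 0 < t <= t1 -> snd (phi t) < eps.
Proof.
  intros Ht.
  destruct (MVT_cor2 (fun s => snd (phi s)) (fun s => snd (clamped_field a b M r (phi s))) 0 t ltac:(lra))
    as [c [Ec Hc]]; [intros c Hc; apply phi_flow; lra |].
  assert (Hdown : snd (clamped_field a b M r (phi c)) < 0).
  { destruct (clamped_flow_tracks_lin_sol c ltac:(lra)) as [A B]. specialize (lin_descent c ltac:(lra)).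
    destruct (clamped_perturbation_bound M r dl r_ge0 (Rlt_le _ _ dl_pos) M_lip M_0 (phi c)) as [_ Q].
    unfold clamped_field; cbn [fst snd].
    set (X := fst (phi c) - eps * fst (lin_sol a b k c)) in *.
    set (Y := snd (phi c) - eps * snd (lin_sol a b k c)) in *.
    replace (b * fst (phi c) + a * snd (phi c) + snd (M (clamp2 r (phi c)))) with
      (eps * (b * fst (lin_sol a b k c) + a * snd (lin_sol a b k c)) + b * X + a * Y + snd (M (clamp2 r (phi c))))
      by (unfold X, Y; ring).
    assert (b * X <= b * (eps * eta)) by (apply Rmult_le_compat_l; [lra | pose proof (Rle_abs X); lra]).
    assert (a * Y <= - a * (eps * eta)) by (pose proof (Rle_abs (- Y)); rewrite Rabs_Ropp in *; nra).
    assert (eps * (b * fst (lin_sol a b k c) + a * snd (lin_sol a b k c)) <= eps * (- c0))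
      by (apply Rmult_le_compat_l; lra).
    assert (eps * ((b - a) * eta) <= eps * (c0 / 4)) by (apply Rmult_le_compat_l; lra).
    assert (2 * dl * r <= eps * (c0 / 4))
      by (unfold r; replace (2 * dl * (eps * (R0 + 2))) with (eps * (2 * dl * (R0 + 2))) by ring;
          apply Rmult_le_compat_l; lra).
    pose proof (Rle_abs (snd (M (clamp2 r (phi c))))). nra. }
  rewrite phi_0 in Ec. cbn [snd] in Ec. nra.
Qed.

End Tracking.

Lemma reset_field_down : snd (field a b M (- k * eps, eps)) < 0.
Proof.
  assert (Hin : in_box r (- k * eps, eps)).
  { assert (k <= R0).
    { unfold R0. rewrite <- (sqrt_pow2 k) at 1 by lra. apply sqrt_le_1_alt. lra. }
    unfold r. split; cbn [fst snd]; [rewrite Rabs_left | rewrite Rabs_pos_eq]; nra. }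
  destruct (perturbation_bound M r dl r_ge0 M_lip M_0 (- k * eps, eps) Hin) as [_ B].
  unfold field, norm1 in *; cbn [fst snd] in *.
  rewrite (Rabs_left (- k * eps)), (Rabs_right eps) in B by nra.
  pose proof (Rle_abs (snd (M (- k * eps, eps)))).
  assert (dl * (- (- k * eps) + eps) = eps * (dl * (k + 1))) by ring.
  assert (eps * (dl * (k + 1)) < eps * c0) by (apply Rmult_lt_compat_l; lra).
  assert (eps * (a - b * k) <= eps * (- c0)) by (apply Rmult_le_compat_l; lra).
  nra.
Qed.

Lemma flow_in_small_box phi : phi 0 = (- k * eps, eps) ->
  (forall t, 0 <= t -> deriv_along phi (clamped_field a b M r) t) ->
  forall t, 0 <= t <= te -> in_box (eps * (R0 + 1 / 2)) (phi t).
Proof.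
  intros Hp0 Hphi t Ht.
  destruct (clamped_flow_tracks_lin_sol phi Hp0 Hphi t ltac:(lra)) as [A B].
  destruct (lin_sol_bound a b k t a_neg ltac:(lra)) as [C D]. fold R0 in C, D.
  assert (Rabs (eps * fst (lin_sol a b k t)) <= eps * R0)
    by (rewrite Rabs_mult, Rabs_pos_eq by lra; apply Rmult_le_compat_l; lra).
  assert (Rabs (eps * snd (lin_sol a b k t)) <= eps * R0)
    by (rewrite Rabs_mult, Rabs_pos_eq by lra; apply Rmult_le_compat_l; lra).
  assert (eps * eta <= eps * (1 / 2)) by (apply Rmult_le_compat_l; lra).
  split; [pose proof (Rabs_triang_inv (fst (phi t)) (eps * fst (lin_sol a b k t)))
         | pose proof (Rabs_triang_inv (snd (phi t)) (eps * snd (lin_sol a b k t)))]; lra.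
Qed.

Lemma cycle_exists : exists z T, ft_stable_cycle_one_impact a b k M eps z T /\
  forall t, 0 <= t -> in_box (eps * (R0 + 1)) (z t).
Proof.
  destruct (clamped_flow_exists a b M r dl r_ge0 (Rlt_le _ _ dl_pos) M_lip (- k * eps, eps)) as [phi [Hp0 Hphi]].
  pose proof (flow_in_small_box phi Hp0 Hphi) as Hsmall.
  set (gam := Rmin (1 / 2) (m / 2)).
  assert (Hgam : 0 < gam <= 1 / 2 /\ gam <= m / 2)
    by (unfold gam; split; [split; [apply Rmin_pos | apply Rmin_l] | apply Rmin_r]; lra).
  assert (Hbox : forall t, 0 <= t <= te -> in_box (r - eps - eps * gam) (phi t)).
  { intros t Ht. apply (in_box_mono (eps * (R0 + 1 / 2))); [unfold r; nra | apply Hsmall, Ht]. }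
  assert (Hhigh : eps + eps * gam < snd (phi te)).
  { destruct (clamped_flow_tracks_lin_sol phi Hp0 Hphi te ltac:(lra)) as [_ B]. rewrite te_height in B.
    pose proof (Rle_abs (eps * (1 + m) - snd (phi te))). rewrite Rabs_minus_sym in B.
    assert (eps * eta <= eps * (m / 4)) by (apply Rmult_le_compat_l; lra).
    assert (eps * gam <= eps * (m / 2)) by (apply Rmult_le_compat_l; lra). nra. }
  destruct (first_crossing (fun x => snd (phi x)) t1 te eps t1_lt) as [T [HT [HphT HTb]]];
    [intros x Hx; apply (cont2_at_deriv_along phi (clamped_field a b M r)), Hphi; lra
    | apply (clamped_flow_descends phi Hp0 Hphi); lra | nra |].
  assert (Hbelow : forall t, 0 < t < T -> snd (phi t) < eps).
  { intros t Ht. destruct (Rle_dec t t1); [apply (clamped_flow_descends phi Hp0 Hphi) | apply HTb]; lra. }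
  assert (HboxT : forall t, 0 <= t < T -> in_box r (phi t)).
  { intros t Ht. apply (in_box_mono (r - eps - eps * gam)); [nra | apply Hbox; lra]. }
  exists (periodic_extension phi T), T.
  destruct (periodic_extension_cycle a b k M eps r phi T ltac:(lra) Hp0 Hphi HboxT HphT Hbelow) as [C1 [C2 C3]].
  split; [split; [| split; [| split]] |]; try assumption.
  - apply (periodic_extension_ft_stable a b k M eps r dl phi T te gam); try assumption; try lra.
    apply reset_field_down.
  - intros t Ht. pose proof (period_phase_bounds T ltac:(lra) t).
    apply (in_box_mono (eps * (R0 + 1 / 2))); [nra | apply Hsmall; lra].
Qed.

End CycleForEps.

Lemma tracking_perturbation_size_exists k R0 te c0 eta : 0 <= k -> 0 <= R0 -> 0 <= te -> 0 < c0 -> 0 < eta ->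
  exists dl, 0 < dl /\ dl <= 1 /\ 2 * dl * (R0 + 2) <= c0 / 4 /\
    8 * dl ^ 2 * (R0 + 2) ^ 2 * exp (te + 1) <= eta ^ 2 /\ dl * (k + 1) < c0.
Proof.
  intros Hk HR0 Hte Hc0 Heta.
  set (E := 3 * (R0 + 2) * exp (te + 1)).
  assert (Hexp : 1 <= exp (te + 1)) by (rewrite <- exp_0 at 1; apply exp_le_compat; lra).
  assert (HE : 2 * (R0 + 2) <= E) by (unfold E; nra).
  destruct (Rmin3_pos_le 1 (c0 / (8 * (R0 + 2))) (Rmin (c0 / (2 * (k + 1))) (eta / E))) as [Hd [Hd1 [Hd2 Hd3]]];
    try apply Rmin_pos; try apply Rdiv_lt_0_compat; try lra.
  set (dl := Rmin 1 (Rmin (c0 / (8 * (R0 + 2))) (Rmin (c0 / (2 * (k + 1))) (eta / E)))) in *.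
  assert (Hdk : dl <= c0 / (2 * (k + 1))) by (pose proof (Rmin_l (c0 / (2 * (k + 1))) (eta / E)); lra).
  assert (HdE : dl <= eta / E) by (pose proof (Rmin_r (c0 / (2 * (k + 1))) (eta / E)); lra).
  exists dl. repeat split; try lra.
  - apply (Rmult_le_compat_r (8 * (R0 + 2))) in Hd2; [| lra].
    replace (c0 / (8 * (R0 + 2)) * (8 * (R0 + 2))) with c0 in Hd2 by (field; lra). lra.
  - apply (Rmult_le_compat_r E) in HdE; [| lra]. replace (eta / E * E) with eta in HdE by (field; lra).
    unfold E in HdE.
    assert (0 <= dl * (3 * (R0 + 2) * exp (te + 1))) by (apply Rmult_le_pos; nra).
    assert ((dl * (3 * (R0 + 2) * exp (te + 1))) ^ 2 <= eta ^ 2) by (apply pow_incr; lra).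
    assert (0 <= dl ^ 2 * (R0 + 2) ^ 2) by (pose proof (pow2_ge_0 dl); pose proof (pow2_ge_0 (R0 + 2)); nra).
    nra.
  - apply (Rmult_le_compat_r (k + 1)) in Hdk; [| lra].
    replace (c0 / (2 * (k + 1)) * (k + 1)) with (c0 / 2) in Hdk by (field; lra). lra.
Qed.

Lemma cycle_constants_exist a b k : a < 0 -> 0 < b -> 0 < k ->
  a / b * (3 * PI / 2) - a / b * arccot (- k) + / 2 * ln (1 + k ^ 2) >
  a / b * (- (PI / 2)) - a / b * arccot (- (a / b)) + / 2 * ln (1 + (a / b) ^ 2) ->
  let te := return_time a b k in let R0 := sqrt (1 + k ^ 2) in
  exists t1 m c0 eta dl, 0 < t1 < te /\
    (forall t, 0 <= t <= t1 -> b * fst (lin_sol a b k t) + a * snd (lin_sol a b k t) <= - c0) /\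
    snd (lin_sol a b k te) = 1 + m /\ 0 < m /\ 0 < c0 /\ a - b * k <= - c0 /\
    0 < eta /\ eta <= 1 / 2 /\ eta <= m / 4 /\ (b - a) * eta <= c0 / 4 /\
    0 < dl /\ dl <= 1 /\ 2 * dl * (R0 + 2) <= c0 / 4 /\
    8 * dl ^ 2 * (R0 + 2) ^ 2 * exp (te + 1) <= eta ^ 2 /\ dl * (k + 1) < c0.
Proof.
  intros Ha Hb Hk Hineq te R0.
  assert (Hte : 0 < te) by (apply return_time_pos, Hb).
  set (m := snd (lin_sol a b k te) - 1).
  assert (Hm : 0 < m) by (pose proof (lin_sol_return_height a b k Ha Hb Hineq); unfold m, te in *; lra).
  set (c0 := (b * k - a) / 2). assert (Hc0 : 0 < c0) by (unfold c0; nra).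
  destruct (lin_sol_descent_near_0 a b k te Hte ltac:(nra)) as [t1 [Ht1 Hdesc]].
  destruct (Rmin3_pos_le (1 / 2) (m / 4) (c0 / (4 * (b - a)))) as [He [He1 [He2 He3]]];
    try apply Rdiv_lt_0_compat; try lra.
  set (eta := Rmin (1 / 2) (Rmin (m / 4) (c0 / (4 * (b - a))))) in *.
  destruct (tracking_perturbation_size_exists k R0 te c0 eta) as [dl Hdl];
    try (unfold R0; apply sqrt_pos); try lra.
  exists t1, m, c0, eta, dl. repeat split; try lra; try apply Hdl; try assumption.
  - unfold m. ring.
  - unfold c0 in *. lra.
  - apply (Rmult_le_compat_r (4 * (b - a))) in He3; [| lra].
    replace (c0 / (4 * (b - a)) * (4 * (b - a))) with c0 in He3 by (field; lra). nra.
Qed.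

Lemma choice_on {A B : Type} (a0 : A) (b0 : B) (I : R -> Prop) (P : R -> A -> B -> Prop) :
  (forall x, I x -> exists a b, P x a b) -> exists (f : R -> A) (g : R -> B), forall x, I x -> P x (f x) (g x).
Proof.
  intros H.
  assert (Hx : forall x, exists ab : A * B, I x -> P x (fst ab) (snd ab)).
  { intros x. destruct (classic (I x)) as [Hi | Hn].
    - destruct (H x Hi) as [a [b Hab]]. exists (a, b). intros _. exact Hab.
    - exists (a0, b0). intros Hi. contradiction. }
  exists (fun x => fst (proj1_sig (constructive_indefinite_description _ (Hx x)))).
  exists (fun x => snd (proj1_sig (constructive_indefinite_description _ (Hx x)))).
  intros x Hi. destruct (constructive_indefinite_description _ (Hx x)) as [ab Hab]. exact (Hab Hi).
Qed.

Lemma small_cycles_exist (a b k : R) (M : R * R -> R * R) :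
  a < 0 -> 0 < b -> 0 < k -> C2_map M -> M (0, 0) = (0, 0) ->
  derivable_pt_lim (fun u => fst (M (u, 0))) 0 0 ->
  derivable_pt_lim (fun v => fst (M (0, v))) 0 0 ->
  derivable_pt_lim (fun u => snd (M (u, 0))) 0 0 ->
  derivable_pt_lim (fun v => snd (M (0, v))) 0 0 ->
  a / b * (3 * PI / 2) - a / b * arccot (- k) + / 2 * ln (1 + k ^ 2) >
  a / b * (- (PI / 2)) - a / b * arccot (- (a / b)) + / 2 * ln (1 + (a / b) ^ 2) ->
  exists eps0, 0 < eps0 /\ forall eps, 0 < eps < eps0 ->
    exists z T, ft_stable_cycle_one_impact a b k M eps z T /\
      forall t, 0 <= t -> in_box (eps * (sqrt (1 + k ^ 2) + 1)) (z t).
Proof.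
  intros Ha Hb Hk HC2 HM0 H1 H2 H3 H4 Hineq.
  destruct (cycle_constants_exist a b k Ha Hb Hk Hineq)
    as (t1 & m & c0 & eta & dl & Ht1 & Hdesc & Hte & Hm & Hc0 & Hc0r & He & He1 & He2 & He3 &
        Hdl & Hdl1 & Hdl2 & Hdl3 & Hdl4).
  destruct (C2_map_small_lipschitz M HC2 H1 H2 H3 H4 dl Hdl) as [rho [Hrho HL]].
  pose proof (sqrt_1_plus_sq_pos k).
  exists (rho / (sqrt (1 + k ^ 2) + 2)). split; [apply Rdiv_lt_0_compat; lra |]. intros eps Heps.
  apply (cycle_exists a b k M t1 (return_time a b k) m c0 eta dl eps); try assumption; try lra.
  apply HL. destruct Heps as [Heps Hlt].
  apply (Rmult_lt_compat_r (sqrt (1 + k ^ 2) + 2)) in Hlt; [| lra].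
  replace (rho / (sqrt (1 + k ^ 2) + 2) * (sqrt (1 + k ^ 2) + 2)) with rho in Hlt by (field; lra). lra.
Qed.

Theorem mainTheorem3 (a b k : R) (M : R * R -> R * R) :
  a < 0 -> 0 < b -> 0 < k ->
  C2_map M ->
  M (0, 0) = (0, 0) ->
  derivable_pt_lim (fun u => fst (M (u, 0))) 0 0 ->
  derivable_pt_lim (fun v => fst (M (0, v))) 0 0 ->
  derivable_pt_lim (fun u => snd (M (u, 0))) 0 0 ->
  derivable_pt_lim (fun v => snd (M (0, v))) 0 0 ->
  a / b * (3 * PI / 2) - a / b * arccot (- k) + / 2 * ln (1 + k ^ 2) >
  a / b * (- (PI / 2)) - a / b * arccot (- (a / b)) + / 2 * ln (1 + (a / b) ^ 2) ->
  exists eps0, 0 < eps0 /\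
    exists (z : R -> R -> R * R) (T : R -> R),
      (forall eps, 0 < eps < eps0 ->
         ft_stable_cycle_one_impact a b k M eps (z eps) (T eps)) /\
      (forall eta, 0 < eta -> exists d, 0 < d /\
         forall eps t, 0 < eps < Rmin d eps0 -> 0 <= t ->
           dist2 (z eps t) (0, 0) < eta).
Proof.
  intros Ha Hb Hk HC2 HM0 H1 H2 H3 H4 Hineq.
  destruct (small_cycles_exist a b k M Ha Hb Hk HC2 HM0 H1 H2 H3 H4 Hineq) as [eps0 [Heps0 Hcycle]].
  destruct (choice_on (fun _ => (0, 0)) 0 (fun eps => 0 < eps < eps0) _ Hcycle) as [z [T HzT]].
  exists eps0. split; [assumption |]. exists z, T. split; [intros eps Heps; apply HzT, Heps |].
  set (C := sqrt (1 + k ^ 2) + 1). assert (HC : 0 < C) by (pose proof (sqrt_1_plus_sq_pos k); unfold C; lra).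
  intros eta Heta. exists (eta / (2 * C)). split; [apply Rdiv_lt_0_compat; lra |].
  intros eps t Heps Ht. pose proof (Rmin_l (eta / (2 * C)) eps0). pose proof (Rmin_r (eta / (2 * C)) eps0).
  destruct (proj2 (HzT eps ltac:(lra)) t Ht) as [Bx By].
  rewrite (surjective_pairing (z eps t)). eapply Rle_lt_trans; [apply dist2_origin_le |].
  fold C in Bx, By. assert (Hsmall : eps < eta / (2 * C)) by lra.
  apply (Rmult_lt_compat_r (2 * C)) in Hsmall; [| lra].
  replace (eta / (2 * C) * (2 * C)) with eta in Hsmall by (field; lra). lra.
Qed.
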